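(* Let $p=q=3$ and let $\mathcal V_{\mathrm{phys}}$, $\Psi_{lmn}$ and the operators $\hat A_{ij},\hat B_{ij},\hat C_{ij}$ be as in the context. Let $(\cdot,\cdot)$ be an inner product on $\mathcal V_{\mathrm{phys}}$ with respect to which every $\hat A_{ij},\hat B_{ij},\hat C_{ij}$ (acting on $\mathcal V_{\mathrm{phys}}$) is symmetric. Then there is a constant $r>0$ such that $(\Psi_{lmn},\Psi_{l'm'n'})=r(2l+1)\delta_{ll'}\delta_{mm'}\delta_{nn'}$ for all indices.
   Context: On smooth functions of $(\boldsymbol u,\boldsymbol v)\in\mathbb{R}^3\times\mathbb{R}^3$ define $\hat A_{ij}=-i(u_i\partial_{u_j}-u_j\partial_{u_i})$, $\hat B_{ij}=-i(v_i\partial_{v_j}-v_j\partial_{v_i})$, $\hat C_{ij}=u_iv_j+\partial_{u_i}\partial_{v_j}$ for $1\le i,j\le3$. With $u=|\boldsymbol u|$, $v=|\boldsymbol v|$, let $\Psi_{lmn}=j_l(uv)Y_{lm}(\boldsymbol u/u)Y_{ln}(\boldsymbol v/v)$ for integers $l\ge0$, $|m|\le l$, $|n|\le l$, where $j_l$ is the spherical Bessel function of the first kind and $Y_{lm}$ are the standard orthonormal spherical harmonics on $S^2$ (Condon–Shortley phase convention). Let $\mathcal V_{\mathrm{phys}}=\mathrm{span}\{\Psi_{lmn}\}$ (a space invariant under the operators above). *)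

From Stdlib Require Import Reals ZArith List.
From Coquelicot Require Import Coquelicot.
Open Scope R_scope.

Definition R3 := (R * R * R)%type.
Inductive ax : Type := X1 | X2 | X3.

Definition coord (w : R3) (i : ax) : R :=
  match w with (a, b, c) => match i with X1 => a | X2 => b | X3 => c end end.
Definition upd (w : R3) (i : ax) (t : R) : R3 :=
  match w with (a, b, c) =>
    match i with X1 => (t, b, c) | X2 => (a, t, c) | X3 => (a, b, t) end end.
Definition norm3 (w : R3) : R :=
  match w with (a, b, c) => sqrt (a * a + b * b + c * c) end.
Definition scal3 (s : R) (w : R3) : R3 :=
  match w with (a, b, c) => (s * a, s * b, s * c) end.

Definition PhysFun := R3 -> R3 -> C.

Definition dC (g : R -> C) (t : R) : C :=
  (Derive (fun s => Re (g s)) t, Derive (fun s => Im (g s)) t).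

Definition du (i : ax) (f : PhysFun) : PhysFun :=
  fun u v => dC (fun t => f (upd u i t) v) (coord u i).
Definition dv (i : ax) (f : PhysFun) : PhysFun :=
  fun u v => dC (fun t => f u (upd v i t)) (coord v i).

Definition opA (i j : ax) (f : PhysFun) : PhysFun :=
  fun u v => ((- Ci) * (RtoC (coord u i) * du j f u v - RtoC (coord u j) * du i f u v))%C.
Definition opB (i j : ax) (f : PhysFun) : PhysFun :=
  fun u v => ((- Ci) * (RtoC (coord v i) * dv j f u v - RtoC (coord v j) * dv i f u v))%C.
Definition opC (i j : ax) (f : PhysFun) : PhysFun :=
  fun u v => (RtoC (coord u i * coord v j) * f u v + du i (dv j f) u v)%C.

(* Spherical Bessel function of the first kind, via its power series
   j_l(x) = sum_k (-1)^k x^(l+2k) / (2^k k! (2l+2k+1)!!)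
          = 2^l x^l sum_k (-1)^k (l+k)! x^(2k) / (k! (2l+2k+1)!). *)
Definition sph_bessel_j (l : nat) (x : R) : R :=
  2 ^ l * x ^ l *
  Series (fun k => (-1) ^ k * INR (fact (l + k)) /
                   (INR (fact k) * INR (fact (2 * l + 2 * k + 1))) * x ^ (2 * k)).

(* m-th derivative of the Legendre polynomial P_l (Rodrigues' formula) *)
Definition legendre_deriv (l m : nat) (z : R) : R :=
  Derive_n (fun t => (t ^ 2 - 1) ^ l) (l + m) z / (2 ^ l * INR (fact l)).

Fixpoint Cpow (c : C) (n : nat) : C :=
  match n with O => RtoC 1 | S k => (c * Cpow c k)%C end.

(* Orthonormal spherical harmonics with Condon-Shortley phase, evaluated at a
   unit vector w = (x,y,z) = (sin th cos ph, sin th sin ph, cos th).  For m >= 0,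
   Y_lm = N_lm P_l^m(cos th) e^{i m ph}, with P_l^m(z) = (-1)^m (1-z^2)^{m/2} P_l^(m)(z)
   and N_lm = sqrt((2l+1)/(4 pi) (l-m)!/(l+m)!); since (sin th)^m e^{i m ph} = (x+iy)^m,
   this is N_lm (-1)^m (x+iy)^m P_l^(m)(z). *)
Definition Ylm_nonneg (l m : nat) (w : R3) : C :=
  match w with (x, y, z) =>
    (RtoC (sqrt ((2 * INR l + 1) / (4 * PI) * INR (fact (l - m)) / INR (fact (l + m)))
           * (-1) ^ m * legendre_deriv l m z)
     * Cpow (x, y) m)%C
  end.

Definition Ylm (l : nat) (m : Z) (w : R3) : C :=
  if (0 <=? m)%Z then Ylm_nonneg l (Z.to_nat m) w
  else (RtoC ((-1) ^ Z.abs_nat m) * Cconj (Ylm_nonneg l (Z.abs_nat m) w))%C.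

Definition Psi (l : nat) (m n : Z) : PhysFun :=
  fun u v => (RtoC (sph_bessel_j l (norm3 u * norm3 v))
              * Ylm l m (scal3 (/ norm3 u) u) * Ylm l n (scal3 (/ norm3 v) v))%C.

Definition valid_idx (l : nat) (m n : Z) : Prop :=
  (Z.abs m <= Z.of_nat l)%Z /\ (Z.abs n <= Z.of_nat l)%Z.

Definition in_Vphys (f : PhysFun) : Prop :=
  exists s : list (C * (nat * Z * Z)),
    List.Forall (fun p => match snd p with (l, m, n) => valid_idx l m n end) s /\
    f = (fun u v => fold_right
            (fun p acc => match snd p with (l, m, n) =>
                            (acc + fst p * Psi l m n u v)%C end)
            (RtoC 0) s).

Definition Fadd (f g : PhysFun) : PhysFun := fun u v => (f u v + g u v)%C.
Definition Fscal (c : C) (f : PhysFun) : PhysFun := fun u v => (c * f u v)%C.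
Definition Fzero : PhysFun := fun _ _ => RtoC 0.

Definition is_inner_product_on_Vphys (ip : PhysFun -> PhysFun -> C) : Prop :=
  (forall f g h, in_Vphys f -> in_Vphys g -> in_Vphys h ->
     ip f (Fadd g h) = (ip f g + ip f h)%C) /\
  (forall c f g, in_Vphys f -> in_Vphys g -> ip f (Fscal c g) = (c * ip f g)%C) /\
  (forall f g, in_Vphys f -> in_Vphys g -> ip g f = Cconj (ip f g)) /\
  (forall f, in_Vphys f -> f <> Fzero -> Im (ip f f) = 0 /\ 0 < Re (ip f f)).

Definition symmetric_on_Vphys (ip : PhysFun -> PhysFun -> C) (T : PhysFun -> PhysFun) : Prop :=
  forall f g, in_Vphys f -> in_Vphys g -> ip (T f) g = ip f (T g).

From Stdlib Require Import Reals ZArith Lia Lra FunctionalExtensionality List.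
From Coquelicot Require Import Coquelicot.
Open Scope R_scope.

(* The [A_ij] and [B_ij] are the angular momentum operators in [u] and in [v].  [Psi_lmn] is an
   eigenfunction of [A_12] and [B_12] with eigenvalues [m] and [n], and [A_23 + i A_31],
   [A_23 - i A_31] (and likewise for [B]) raise and lower [m] (resp. [n]) by one, with
   coefficient [sqrt ((l - m) (l + m + 1))] resp. [sqrt ((l + m) (l - m + 1))].  Symmetry then
   forces orthogonality for distinct [m] or [n], makes the norm of [Psi_lmn] independent of [m]
   and [n], and, since raising kills [Psi_lln] but not [Psi_l'ln] for [l' > l], orthogonality
   for distinct [l].
   It remains to compare the norms for [l] and [l + 1].  For [e <= 2],
   [Psi_(l+e),l,l = G_e(u,v) (u_1 + i u_2)^l (v_1 + i v_2)^l] with an explicit radial factor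
   [G_e] built from [j_(l+e)].  By the recurrence of the spherical Bessel functions, [C_33] maps
   [Psi_lll] to [(2l+1)/(2l+3) Psi_(l+1),l,l] and [Psi_(l+1),l,l] to [Psi_lll] plus a multiple
   of [Psi_(l+2),l,l]; symmetry of [C_33] gives [|Psi_(l+1)|^2 / (2l+3) = |Psi_l|^2 / (2l+1)]. *)

Lemma is_derive_eq (f : R -> R) (x l l' : R) : is_derive f x l -> l = l' -> is_derive f x l'.
Proof. now intros H ->. Qed.

Lemma is_derive_Rconst (c t : R) : is_derive (fun _ : R => c) t 0.
Proof. exact (is_derive_const c t). Qed.

Lemma is_derive_Rid (t : R) : is_derive (fun s : R => s) t 1.
Proof. exact (is_derive_id t). Qed.

Lemma is_derive_Rplus (f g : R -> R) x df dg : is_derive f x df -> is_derive g x dg ->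
  is_derive (fun s => f s + g s) x (df + dg).
Proof. exact (is_derive_plus f g x df dg). Qed.

Lemma is_derive_Rminus (f g : R -> R) x df dg : is_derive f x df -> is_derive g x dg ->
  is_derive (fun s => f s - g s) x (df - dg).
Proof. exact (is_derive_minus f g x df dg). Qed.

Lemma is_derive_Ropp (f : R -> R) x df : is_derive f x df -> is_derive (fun s => - f s) x (- df).
Proof. exact (is_derive_opp f x df). Qed.

Lemma is_derive_Rmult (f g : R -> R) x df dg : is_derive f x df -> is_derive g x dg ->
  is_derive (fun s => f s * g s) x (df * g x + f x * dg).
Proof.
  intros Hf Hg. eapply is_derive_eq.
  - apply (is_derive_mult f g x df dg Hf Hg). intros; apply Rmult_comm.
  - unfold plus, mult; simpl; ring.
Qed.

Lemma is_derive_Rcomp (f g : R -> R) x df dg : is_derive f (g x) df -> is_derive g x dg ->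
  is_derive (fun s => f (g s)) x (dg * df).
Proof. exact (is_derive_comp f g x df dg). Qed.

Lemma is_derive_vanishing (f : R -> R) t l : (forall s, f s = 0) -> is_derive f t l -> l = 0.
Proof.
  intros Hf Hd. assert (H0 : is_derive (fun _ : R => 0) t l) by (apply (is_derive_ext f); auto).
  rewrite <- (is_derive_unique _ _ _ H0). apply Derive_const.
Qed.

Lemma INR_fact_S n : INR (fact (S n)) = INR (S n) * INR (fact n).
Proof. now rewrite fact_simpl, mult_INR. Qed.

Lemma sum_n_Sn_R (a : nat -> R) n : sum_n a (S n) = sum_n a n + a (S n).
Proof. exact (sum_Sn a n). Qed.

Lemma sum_n_eq_0_R (a : nat -> R) n : (forall j, (j <= n)%nat -> a j = 0) -> sum_n a n = 0.
Proof.
  induction n as [|n IH]; intros H.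
  - rewrite sum_O. apply H; lia.
  - rewrite sum_n_Sn_R, IH.
    + rewrite (H (S n)) by lia. lra.
    + intros; apply H; lia.
Qed.

Definition is_Cderive (g : R -> C) (t : R) (d : C) : Prop :=
  is_derive (fun s => Re (g s)) t (Re d) /\ is_derive (fun s => Im (g s)) t (Im d).

Lemma is_Cderive_unique g t d : is_Cderive g t d -> dC g t = d.
Proof.
  intros [H1 H2]. unfold dC.
  rewrite (is_derive_unique (fun s : R => Re (g s)) t _ H1).
  rewrite (is_derive_unique (fun s : R => Im (g s)) t _ H2).
  now destruct d.
Qed.

Lemma is_Cderive_ext g h t d : (forall s, g s = h s) -> is_Cderive g t d -> is_Cderive h t d.
Proof.
  intros E [H1 H2]; split.
  - apply (is_derive_ext (fun s => Re (g s))); [intros; now rewrite E | exact H1].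
  - apply (is_derive_ext (fun s => Im (g s))); [intros; now rewrite E | exact H2].
Qed.

Lemma is_Cderive_eq g t d d' : is_Cderive g t d -> d = d' -> is_Cderive g t d'.
Proof. now intros H ->. Qed.

Lemma is_Cderive_const c t : is_Cderive (fun _ => c) t (RtoC 0).
Proof. split; apply is_derive_Rconst. Qed.

Lemma is_Cderive_RtoC (f : R -> R) (t d : R) :
  is_derive f t d -> is_Cderive (fun s => RtoC (f s)) t (RtoC d).
Proof. split; simpl; [exact H | apply is_derive_Rconst]. Qed.

Lemma is_Cderive_pair (f g : R -> R) (t a b : R) :
  is_derive f t a -> is_derive g t b -> is_Cderive (fun s => (f s, g s)) t (a, b).
Proof. now split. Qed.

Lemma is_Cderive_mult g h t dg dh : is_Cderive g t dg -> is_Cderive h t dh ->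
  is_Cderive (fun s => (g s * h s)%C) t (dg * h t + g t * dh)%C.
Proof.
  intros [G1 G2] [H1 H2]; split.
  - apply (is_derive_ext (fun s => Re (g s) * Re (h s) - Im (g s) * Im (h s))).
    { intros; unfold Re, Im; simpl; ring. }
    eapply is_derive_eq.
    + apply is_derive_Rminus; apply is_derive_Rmult; eauto.
    + unfold Re, Im; simpl; ring.
  - apply (is_derive_ext (fun s => Re (g s) * Im (h s) + Im (g s) * Re (h s))).
    { intros; unfold Re, Im; simpl; ring. }
    eapply is_derive_eq.
    + apply is_derive_Rplus; apply is_derive_Rmult; eauto.
    + unfold Re, Im; simpl; ring.
Qed.

Lemma is_Cderive_conj g t d : is_Cderive g t d -> is_Cderive (fun s => Cconj (g s)) t (Cconj d).
Proof. intros [G1 G2]; split; [exact G1 | apply is_derive_Ropp, G2]. Qed.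

Lemma is_Cderive_scal c g t d : is_Cderive g t d -> is_Cderive (fun s => (c * g s)%C) t (c * d)%C.
Proof.
  intros H. eapply is_Cderive_eq.
  - exact (is_Cderive_mult (fun _ => c) g t _ _ (is_Cderive_const c t) H).
  - apply injective_projections; simpl; ring.
Qed.

Lemma is_Cderive_Cpow g t d n : is_Cderive g t d ->
  is_Cderive (fun s => Cpow (g s) n) t (RtoC (INR n) * Cpow (g t) (pred n) * d)%C.
Proof.
  intros H. induction n as [|n IH].
  - simpl. apply (is_Cderive_eq _ _ (RtoC 0)); [apply (is_Cderive_const (RtoC 1)) |].
    apply injective_projections; simpl; ring.
  - eapply is_Cderive_eq; [exact (is_Cderive_mult g (fun s => Cpow (g s) n) t _ _ H IH) |].
    destruct n as [|n]; simpl Cpow; simpl pred.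
    + simpl INR. ring.
    + rewrite (S_INR (S n)), RtoC_plus. simpl Cpow. ring.
Qed.

(** * The spherical Bessel functions *)

Definition bessel_coef (l k : nat) : R :=
  (-1) ^ k * INR (fact (l + k)) / (INR (fact k) * INR (fact (2 * l + 2 * k + 1))).

(* [j_l x = 2^l x^l h_l (x^2)] with [h_l] entire. *)
Definition bessel_h (l : nat) (y : R) : R := PSeries (bessel_coef l) y.

Lemma sph_bessel_j_h l x : sph_bessel_j l x = 2 ^ l * x ^ l * bessel_h l (x ^ 2).
Proof.
  unfold sph_bessel_j, bessel_h, PSeries. f_equal. apply Series_ext. intros k.
  unfold bessel_coef. now rewrite <- pow_mult.
Qed.

Lemma bessel_coef_neq0 l n : bessel_coef l n <> 0.
Proof.
  unfold bessel_coef.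
  pose proof (INR_fact_lt_0 (l + n)); pose proof (INR_fact_lt_0 n);
  pose proof (INR_fact_lt_0 (2 * l + 2 * n + 1)).
  assert ((-1) ^ n <> 0) by (apply pow_nonzero; lra).
  apply Rmult_integral_contrapositive; split.
  - apply Rmult_integral_contrapositive; split; lra.
  - apply Rinv_neq_0_compat. nra.
Qed.

Lemma bessel_coef_ratio l n : Rabs (bessel_coef l (S n) / bessel_coef l n) =
  INR (S (l + n)) / (INR (S n) * INR (S (S (2 * l + 2 * n + 1))) * INR (S (2 * l + 2 * n + 1))).
Proof.
  unfold bessel_coef.
  replace (l + S n)%nat with (S (l + n)) by lia.
  replace (2 * l + 2 * S n + 1)%nat with (S (S (2 * l + 2 * n + 1))) by lia.
  rewrite !INR_fact_S.
  pose proof (INR_fact_lt_0 (l + n)); pose proof (INR_fact_lt_0 n);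
  pose proof (INR_fact_lt_0 (2 * l + 2 * n + 1)).
  assert (HS : forall k, 0 < INR (S k)) by (intros; apply lt_0_INR; lia).
  pose proof (HS (l + n)%nat); pose proof (HS n); pose proof (HS (2 * l + 2 * n + 1)%nat);
  pose proof (HS (S (2 * l + 2 * n + 1))).
  assert ((-1) ^ n <> 0) by (apply pow_nonzero; lra).
  rewrite <- Rabs_Ropp, Rabs_pos_eq.
  - simpl pow. field. repeat split; lra.
  - apply Rlt_le. simpl pow.
    replace (- _) with (INR (S (l + n)) / (INR (S n) * INR (S (S (2 * l + 2 * n + 1)))
      * INR (S (2 * l + 2 * n + 1)))) by (field; repeat split; lra).
    apply Rdiv_lt_0_compat; [lra |]. repeat apply Rmult_lt_0_compat; lra.
Qed.

Lemma CV_radius_bessel_coef l : CV_radius (bessel_coef l) = p_infty.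
Proof.
  apply CV_radius_infinite_DAlembert; [apply bessel_coef_neq0 |].
  apply is_lim_seq_le_le with (u := fun _ => 0) (w := fun n => / INR (S n)).
  - intros n. rewrite bessel_coef_ratio.
    assert (0 < INR (S n)) by (apply lt_0_INR; lia).
    assert (0 < INR (S (l + n))) by (apply lt_0_INR; lia).
    assert (1 <= INR (S (S (2 * l + 2 * n + 1)))) by (apply (le_INR 1); lia).
    assert (INR (S (l + n)) <= INR (S (2 * l + 2 * n + 1))) by (apply le_INR; lia).
    split.
    + apply Rlt_le, Rdiv_lt_0_compat; [lra |]. repeat apply Rmult_lt_0_compat; lra.
    + apply Rle_trans with (INR (S (l + n)) / (INR (S n) * INR (S (l + n)))).
      * unfold Rdiv. apply Rmult_le_compat_l; [lra |].
        apply Rinv_le_contravar; [nra |].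
        rewrite Rmult_assoc. apply Rmult_le_compat_l; [lra | nra].
      * right. field. lra.
  - apply is_lim_seq_const.
  - apply (is_lim_seq_incr_1 (fun n => / INR n)).
    replace (Finite 0) with (Rbar_inv p_infty) by reflexivity.
    apply is_lim_seq_inv; [apply is_lim_seq_INR | discriminate].
Qed.

Lemma bessel_h_inside l y : Rbar_lt (Rabs y) (CV_radius (bessel_coef l)).
Proof. now rewrite CV_radius_bessel_coef. Qed.

Lemma PS_derive_bessel_coef l n : PS_derive (bessel_coef l) n = - bessel_coef (S l) n.
Proof.
  unfold PS_derive, bessel_coef.
  replace (l + S n)%nat with (S (l + n)) by lia.
  replace (S l + n)%nat with (S (l + n)) by lia.
  replace (2 * l + 2 * S n + 1)%nat with (2 * S l + 2 * n + 1)%nat by lia.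
  rewrite (INR_fact_S n).
  pose proof (INR_fact_lt_0 n); pose proof (INR_fact_lt_0 (2 * S l + 2 * n + 1)).
  assert (0 < INR (S n)) by (apply lt_0_INR; lia).
  simpl pow. field. lra.
Qed.

Lemma is_derive_bessel_h l y : is_derive (bessel_h l) y (- bessel_h (S l) y).
Proof.
  unfold bessel_h. eapply is_derive_eq.
  - apply is_derive_PSeries, bessel_h_inside.
  - rewrite <- PSeries_opp. apply PSeries_ext. intros n.
    unfold PS_opp. now rewrite PS_derive_bessel_coef.
Qed.

Lemma Derive_bessel_h l y : Derive (bessel_h l) y = - bessel_h (S l) y.
Proof. apply is_derive_unique, is_derive_bessel_h. Qed.

Lemma ex_derive_bessel_h l y : ex_derive (bessel_h l) y.
Proof. eexists; apply is_derive_bessel_h. Qed.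

Lemma bessel_coef_rec l n :
  bessel_coef l n + 4 * PS_incr_1 (bessel_coef (S (S l))) n
  = 2 * (2 * INR l + 3) * bessel_coef (S l) n.
Proof.
  assert (0 <= INR l) by apply pos_INR.
  destruct n as [|n].
  - change (PS_incr_1 (bessel_coef (S (S l))) 0) with 0.
    unfold bessel_coef. rewrite !Nat.add_0_r.
    replace (2 * S l + 1)%nat with (S (S (2 * l + 1))) by lia.
    rewrite !INR_fact_S.
    pose proof (INR_fact_lt_0 l); pose proof (INR_fact_lt_0 (2 * l + 1)).
    set (F1 := INR (fact l)) in *. set (F2 := INR (fact (2 * l + 1))) in *.
    rewrite !S_INR, !plus_INR, !mult_INR. simpl INR. simpl pow.
    field. repeat split; lra.
  - simpl PS_incr_1. unfold bessel_coef.
    replace (l + S n)%nat with (S (l + n)) by lia.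
    replace (S (S l) + n)%nat with (S (S (l + n))) by lia.
    replace (S l + S n)%nat with (S (S (l + n))) by lia.
    replace (2 * l + 2 * S n + 1)%nat with (S (S (2 * l + 2 * n + 1))) by lia.
    replace (2 * S (S l) + 2 * n + 1)%nat with (S (S (S (S (2 * l + 2 * n + 1))))) by lia.
    replace (2 * S l + 2 * S n + 1)%nat with (S (S (S (S (2 * l + 2 * n + 1))))) by lia.
    rewrite !INR_fact_S.
    pose proof (INR_fact_lt_0 (l + n)); pose proof (INR_fact_lt_0 n);
    pose proof (INR_fact_lt_0 (2 * l + 2 * n + 1)).
    set (F1 := INR (fact (l + n))) in *. set (F2 := INR (fact n)) in *.
    set (F3 := INR (fact (2 * l + 2 * n + 1))) in *.
    rewrite !S_INR, !plus_INR, !mult_INR. simpl INR. simpl pow.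
    assert (0 <= INR n) by apply pos_INR.
    field. repeat split; lra.
Qed.

(* The three-term recurrence [j_(l-1) + j_(l+1) = (2l+1)/x j_l] in terms of [h_l]. *)
Lemma bessel_h_rec l y :
  bessel_h l y + 4 * y * bessel_h (S (S l)) y = 2 * (2 * INR l + 3) * bessel_h (S l) y.
Proof.
  unfold bessel_h. rewrite Rmult_assoc, <- PSeries_incr_1, <- PSeries_scal, <- PSeries_plus.
  - rewrite <- PSeries_scal. apply PSeries_ext. intros n.
    unfold PS_plus, PS_scal, plus, scal; simpl. unfold mult; simpl.
    now rewrite <- bessel_coef_rec.
  - apply CV_radius_inside, bessel_h_inside.
  - apply CV_radius_inside. rewrite CV_radius_scal, CV_radius_incr_1, CV_radius_bessel_coef.
    + exact I.
    + lra.
Qed.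

Lemma bessel_h_0 l : bessel_h l 0 = bessel_coef l 0.
Proof. apply PSeries_0. Qed.

Lemma ex_derive_sph_bessel_j l x : ex_derive (sph_bessel_j l) x.
Proof.
  apply (ex_derive_ext (fun x => 2 ^ l * x ^ l * bessel_h l (x ^ 2))).
  { intros; symmetry; apply sph_bessel_j_h. }
  apply ex_derive_mult.
  - apply ex_derive_mult; [apply ex_derive_const | apply ex_derive_pow, ex_derive_id].
  - apply (ex_derive_comp (bessel_h l) (fun x => x ^ 2)).
    + apply ex_derive_bessel_h.
    + apply ex_derive_pow, ex_derive_id.
Qed.

Lemma sph_bessel_j_0 l : (0 < l)%nat -> sph_bessel_j l 0 = 0.
Proof. intros. rewrite sph_bessel_j_h, pow_i by lia. ring. Qed.

(** * Derivatives of [(t^2 - 1)^L] and Legendre functions *)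

Definition rodrigues_deriv (L k : nat) (t : R) : R := Derive_n (fun t => (t ^ 2 - 1) ^ L) k t.

Definition rodrigues_coef (L j : nat) : R := Binomial.C L j * (-1) ^ (L - j).

Lemma rodrigues_binomial L t :
  (t ^ 2 - 1) ^ L = sum_n (fun j => rodrigues_coef L j * t ^ (2 * j)) L.
Proof.
  rewrite sum_n_Reals. replace (t ^ 2 - 1) with (t ^ 2 + -1) by ring.
  rewrite binomial. apply sum_eq. intros i _. unfold rodrigues_coef. rewrite pow_mult. ring.
Qed.

Lemma ex_derive_n_monomial c p k t : ex_derive_n (fun y => c * y ^ p) k t.
Proof.
  destruct k as [|k]; [exact I |].
  destruct (le_lt_dec (S k) p); eexists; apply (is_derive_n_scal_l (fun y => y ^ p) (S k)).
  - apply is_derive_n_pow_smalli; auto.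
  - apply is_derive_n_pow_bigi; auto.
Qed.

Lemma is_derive_n_rodrigues L k t : is_derive_n (fun t => (t ^ 2 - 1) ^ L) k t
  (sum_n (fun j => rodrigues_coef L j * Derive_n (fun x => x ^ (2 * j)) k t) L).
Proof.
  apply (is_derive_n_ext (fun y => sum_n (fun j => rodrigues_coef L j * y ^ (2 * j)) L)).
  { intros; symmetry; apply rodrigues_binomial. }
  replace (sum_n (fun j => rodrigues_coef L j * Derive_n (fun x => x ^ (2 * j)) k t) L)
    with (sum_n (fun j => Derive_n (fun y => rodrigues_coef L j * y ^ (2 * j)) k t) L).
  - apply (is_derive_n_sum_n L (fun j y => rodrigues_coef L j * y ^ (2 * j)) k t).
    apply filter_forall. intros y l j _ _. apply ex_derive_n_monomial.
  - apply sum_n_ext. intros j. apply Derive_n_scal_l.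
Qed.

Lemma rodrigues_deriv_sum L k t : rodrigues_deriv L k t =
  sum_n (fun j => rodrigues_coef L j * Derive_n (fun x => x ^ (2 * j)) k t) L.
Proof. apply is_derive_n_unique, is_derive_n_rodrigues. Qed.

Lemma is_derive_rodrigues_deriv L k t :
  is_derive (rodrigues_deriv L k) t (rodrigues_deriv L (S k) t).
Proof.
  apply (Derive_n_correct _ (S k) t). eexists. exact (is_derive_n_rodrigues L (S k) t).
Qed.

(* A term [t^(2j)] of the binomial expansion dies after more than [2j] derivatives, so only
   the top one or two terms survive in the next four lemmas. *)
Lemma rodrigues_deriv_over L t : rodrigues_deriv L (S (2 * L)) t = 0.
Proof.
  rewrite rodrigues_deriv_sum. apply sum_n_eq_0_R. intros j Hj.
  rewrite Derive_n_pow_bigi by lia. ring.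
Qed.

Lemma rodrigues_deriv_top L t : rodrigues_deriv L (2 * L) t = INR (fact (2 * L)).
Proof.
  rewrite rodrigues_deriv_sum. destruct L as [|L].
  - rewrite sum_O. unfold rodrigues_coef. rewrite C_n_n. simpl. ring.
  - rewrite sum_n_Sn_R, sum_n_eq_0_R.
    + rewrite Derive_n_pow_smalli by lia.
      unfold rodrigues_coef. rewrite C_n_n, !Nat.sub_diag. simpl pow. simpl INR. field.
    + intros j Hj. rewrite Derive_n_pow_bigi by lia. ring.
Qed.

Lemma rodrigues_deriv_top1 l t :
  rodrigues_deriv (S l) (S (2 * l)) t = INR (fact (2 * l + 2)) * t.
Proof.
  rewrite rodrigues_deriv_sum, sum_n_Sn_R, sum_n_eq_0_R.
  - rewrite Derive_n_pow_smalli by lia.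
    unfold rodrigues_coef. rewrite C_n_n, Nat.sub_diag.
    replace (2 * S l - S (2 * l))%nat with 1%nat by lia.
    replace (2 * S l)%nat with (2 * l + 2)%nat by lia.
    simpl pow. simpl INR. field.
  - intros j Hj. rewrite Derive_n_pow_bigi by lia. ring.
Qed.

Lemma C_Sn_n n : Binomial.C (S n) n = INR (S n).
Proof.
  unfold Binomial.C. replace (S n - n)%nat with 1%nat by lia.
  rewrite INR_fact_S. pose proof (INR_fact_lt_0 n). simpl (fact 1). simpl (INR 1).
  field. lra.
Qed.

Lemma rodrigues_deriv_top2 l t : rodrigues_deriv (S (S l)) (2 * l + 2) t =
  INR (S (S l)) * INR (fact (2 * l + 2)) * ((2 * INR l + 3) * t ^ 2 - 1).
Proof.
  rewrite rodrigues_deriv_sum, sum_n_Sn_R, sum_n_Sn_R, sum_n_eq_0_R.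
  - rewrite !Derive_n_pow_smalli by lia.
    unfold rodrigues_coef. rewrite C_n_n, C_Sn_n, Nat.sub_diag.
    replace (S (S l) - S l)%nat with 1%nat by lia.
    replace (2 * S l - (2 * l + 2))%nat with 0%nat by lia.
    replace (2 * S (S l) - (2 * l + 2))%nat with 2%nat by lia.
    replace (2 * S (S l))%nat with (S (S (2 * l + 2))) by lia.
    replace (2 * S l)%nat with (2 * l + 2)%nat by lia.
    rewrite !INR_fact_S. pose proof (INR_fact_lt_0 (2 * l + 2)).
    set (F := INR (fact (2 * l + 2))) in *.
    rewrite !S_INR, plus_INR, mult_INR. simpl INR. simpl pow. simpl fact. simpl INR. field.
  - intros j Hj. rewrite Derive_n_pow_bigi by lia. ring.
Qed.

(* [q = (t^2 - 1)^L] solves [(t^2 - 1) q' = 2 L t q]; differentiating [N] times gives: *)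
Lemma rodrigues_deriv_ode L N t :
  (t ^ 2 - 1) * rodrigues_deriv L (S N) t - 2 * (INR L - INR N) * t * rodrigues_deriv L N t
  - INR N * (2 * INR L - INR N + 1) * rodrigues_deriv L (pred N) t = 0.
Proof.
  revert t. induction N as [|N IH]; intros t.
  - unfold rodrigues_deriv. simpl INR.
    change (Derive_n ?f 1 t) with (Derive f t). change (Derive_n ?f 0 t) with (f t).
    assert (H : is_derive (fun t => (t ^ 2 - 1) ^ L) t (INR L * (t ^ 2 - 1) ^ pred L * (2 * t))).
    { auto_derive; [trivial |]. replace (t * (t * 1) + - (1)) with (t ^ 2 - 1) by ring. ring. }
    rewrite (is_derive_unique (fun t : R => (t ^ 2 - 1) ^ L) t _ H).
    destruct L as [|L]; [simpl; ring |]. simpl pred. rewrite S_INR. simpl pow. ring.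
  - set (F := fun s => (s ^ 2 - 1) * rodrigues_deriv L (S N) s
       - 2 * (INR L - INR N) * s * rodrigues_deriv L N s
       - INR N * (2 * INR L - INR N + 1) * rodrigues_deriv L (pred N) s).
    assert (Hd : is_derive F t
      (2 * t * rodrigues_deriv L (S N) t + (t ^ 2 - 1) * rodrigues_deriv L (S (S N)) t
       - 2 * (INR L - INR N) * (rodrigues_deriv L N t + t * rodrigues_deriv L (S N) t)
       - INR N * (2 * INR L - INR N + 1) * rodrigues_deriv L (S (pred N)) t)).
    { assert (Hq : is_derive (fun s : R => s ^ 2 - 1) t (2 * t)) by (auto_derive; [trivial | ring]).
      assert (Hl : is_derive (fun s : R => 2 * (INR L - INR N) * s) t (2 * (INR L - INR N)))
        by (auto_derive; [trivial | ring]).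
      unfold F. eapply is_derive_eq.
      - apply is_derive_Rminus; [apply is_derive_Rminus |].
        + apply is_derive_Rmult; [exact Hq | apply is_derive_rodrigues_deriv].
        + apply is_derive_Rmult; [exact Hl | apply is_derive_rodrigues_deriv].
        + apply is_derive_Rmult; [apply is_derive_Rconst | apply is_derive_rodrigues_deriv].
      - cbv beta. ring. }
    pose proof (is_derive_vanishing F t _ IH Hd) as E.
    destruct N as [|N].
    + simpl in *. lra.
    + simpl pred in *. rewrite !S_INR in *. lra.
Qed.

Lemma is_derive_legendre_deriv l m z :
  is_derive (legendre_deriv l m) z (legendre_deriv l (S m) z).
Proof.
  unfold legendre_deriv.
  apply (is_derive_ext (fun z => rodrigues_deriv l (l + m) z * / (2 ^ l * INR (fact l)))).
  { intros; reflexivity. }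
  eapply is_derive_eq.
  - apply is_derive_Rmult; [apply is_derive_rodrigues_deriv | apply is_derive_Rconst].
  - rewrite Nat.add_succ_r, Rmult_0_r, Rplus_0_r. reflexivity.
Qed.

Lemma legendre_deriv_over l z : legendre_deriv l (S l) z = 0.
Proof.
  unfold legendre_deriv. replace (l + S l)%nat with (S (2 * l)) by lia.
  fold (rodrigues_deriv l (S (2 * l)) z). rewrite rodrigues_deriv_over. unfold Rdiv. ring.
Qed.

(* The associated Legendre equation, written for the [j]-th derivative of [P_l]. *)
Lemma legendre_deriv_ode l j z : (j < l)%nat ->
  (1 - z * z) * legendre_deriv l (S (S j)) z - 2 * INR (S j) * z * legendre_deriv l (S j) z
  = - (INR (l - j) * INR (l + j + 1)) * legendre_deriv l j z.
Proof.
  intros Hj. unfold legendre_deriv.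
  pose proof (rodrigues_deriv_ode l (S (l + j)) z) as E.
  simpl pred in E. unfold rodrigues_deriv in E.
  replace (l + S (S j))%nat with (S (S (l + j))) by lia.
  replace (l + S j)%nat with (S (l + j)) by lia.
  set (D2 := Derive_n (fun t => (t ^ 2 - 1) ^ l) (S (S (l + j))) z) in *.
  set (D1 := Derive_n (fun t => (t ^ 2 - 1) ^ l) (S (l + j)) z) in *.
  set (D0 := Derive_n (fun t => (t ^ 2 - 1) ^ l) (l + j) z) in *.
  assert (Hc : 0 < 2 ^ l * INR (fact l))
    by (apply Rmult_lt_0_compat; [apply pow_lt; lra | apply INR_fact_lt_0]).
  set (c := 2 ^ l * INR (fact l)) in *.
  replace ((1 - z * z) * (D2 / c) - 2 * INR (S j) * z * (D1 / c))
    with (((1 - z * z) * D2 - 2 * INR (S j) * z * D1) / c) by (field; lra).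
  replace (- (INR (l - j) * INR (l + j + 1)) * (D0 / c))
    with ((- (INR (l - j) * INR (l + j + 1)) * D0) / c) by (field; lra).
  f_equal.
  rewrite minus_INR by lia. rewrite !plus_INR, !S_INR, !plus_INR in *. simpl pow in E.
  simpl INR. lra.
Qed.

Definition ax_eqb (i k : ax) : bool :=
  match i, k with X1, X1 | X2, X2 | X3, X3 => true | _, _ => false end.

Definition kron (i k : ax) : R := if ax_eqb i k then 1 else 0.

Definition sqnorm3 (u : R3) : R :=
  coord u X1 * coord u X1 + coord u X2 * coord u X2 + coord u X3 * coord u X3.

Lemma norm3_sqrt u : norm3 u = sqrt (sqnorm3 u).
Proof. now destruct u as [[a b] c]. Qed.

Lemma sqnorm3_ge0 u : 0 <= sqnorm3 u.
Proof. unfold sqnorm3. nra. Qed.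

Lemma norm3_pos u : 0 < sqnorm3 u -> 0 < norm3 u.
Proof. intros H; rewrite norm3_sqrt; apply sqrt_lt_R0, H. Qed.

Lemma norm3_sqr u : norm3 u * norm3 u = sqnorm3 u.
Proof. rewrite norm3_sqrt. apply sqrt_sqrt, sqnorm3_ge0. Qed.

Lemma sqnorm3_eq0 u : ~ 0 < sqnorm3 u -> u = ((0, 0), 0).
Proof.
  intros H. pose proof (sqnorm3_ge0 u). destruct u as [[a b] c]. unfold sqnorm3 in *. simpl in *.
  assert (a = 0) by nra. assert (b = 0) by nra. assert (c = 0) by nra. now subst.
Qed.

Lemma sqnorm3_origin : sqnorm3 ((0, 0), 0) = 0.
Proof. unfold sqnorm3; simpl; ring. Qed.

Lemma norm3_origin : norm3 ((0, 0), 0) = 0.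
Proof. rewrite norm3_sqrt, sqnorm3_origin. apply sqrt_0. Qed.

Lemma upd_coord u k : upd u k (coord u k) = u.
Proof. now destruct u as [[a b] c]; destruct k. Qed.

Lemma is_derive_coord_upd u k i t0 : is_derive (fun t => coord (upd u k t) i) t0 (kron i k).
Proof.
  destruct u as [[a b] c]; destruct i, k; unfold kron; simpl;
  first [apply is_derive_Rid | apply is_derive_Rconst].
Qed.

Lemma is_derive_sqnorm3_upd u k t0 : is_derive (fun t => sqnorm3 (upd u k t)) t0 (2 * t0).
Proof. destruct u as [[a b] c]; destruct k; unfold sqnorm3; simpl; auto_derive; auto; ring. Qed.

Lemma is_derive_norm3_upd u k : 0 < sqnorm3 u ->
  is_derive (fun t => norm3 (upd u k t)) (coord u k) (coord u k / norm3 u).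
Proof.
  intros H. pose proof (norm3_pos u H).
  apply (is_derive_ext (fun t => sqrt (sqnorm3 (upd u k t)))).
  { intros; symmetry; apply norm3_sqrt. }
  eapply is_derive_eq.
  - apply (is_derive_Rcomp sqrt (fun t => sqnorm3 (upd u k t))).
    + rewrite upd_coord. auto_derive; [exact H | reflexivity].
    + apply is_derive_sqnorm3_upd.
  - rewrite <- norm3_sqrt. field. lra.
Qed.

Definition dir (u : R3) (i : ax) : R := / norm3 u * coord u i.

Definition ddir (u : R3) (i k : ax) : R := (kron i k - dir u i * dir u k) / norm3 u.

Lemma dir_upd_coord u k i : dir (upd u k (coord u k)) i = dir u i.
Proof. now rewrite upd_coord. Qed.

Lemma is_derive_dir_upd u k i : 0 < sqnorm3 u ->
  is_derive (fun t => dir (upd u k t) i) (coord u k) (ddir u i k).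
Proof.
  intros H. pose proof (norm3_pos u H). unfold dir.
  eapply is_derive_eq.
  - apply (is_derive_Rmult (fun t => / norm3 (upd u k t)) (fun t => coord (upd u k t) i)).
    + apply (is_derive_Rcomp Rinv (fun t => norm3 (upd u k t))).
      * rewrite upd_coord. auto_derive; [lra | reflexivity].
      * now apply is_derive_norm3_upd.
    + apply is_derive_coord_upd.
  - rewrite upd_coord. unfold ddir, dir. field. lra.
Qed.

Lemma dir_sqnorm u : 0 < sqnorm3 u ->
  dir u X1 * dir u X1 + dir u X2 * dir u X2 + dir u X3 * dir u X3 = 1.
Proof.
  intros H. pose proof (norm3_pos u H). pose proof (norm3_sqr u). unfold dir.
  transitivity (sqnorm3 u / (norm3 u * norm3 u)); [unfold sqnorm3; field; lra |].
  rewrite H1. field. lra.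
Qed.

Lemma coord_dir u i : 0 < sqnorm3 u -> coord u i = norm3 u * dir u i.
Proof. intros H. pose proof (norm3_pos u H). unfold dir. field. lra. Qed.

(** * Derivatives of the spherical harmonics *)

Definition Ynorm (l m : nat) : R :=
  sqrt ((2 * INR l + 1) / (4 * PI) * INR (fact (l - m)) / INR (fact (l + m))).

Lemma Ynorm_sqr L m : (m <= L)%nat -> Ynorm L m * Ynorm L m =
  (2 * INR L + 1) / (4 * PI) * INR (fact (L - m)) / INR (fact (L + m)).
Proof.
  intros. unfold Ynorm. apply sqrt_sqrt.
  pose proof PI_RGT_0. pose proof (pos_INR L).
  pose proof (INR_fact_lt_0 (L - m)). pose proof (INR_fact_lt_0 (L + m)).
  apply Rmult_le_pos; [apply Rmult_le_pos |].
  - apply Rdiv_le_0_compat; lra.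
  - lra.
  - apply Rlt_le, Rinv_0_lt_compat; lra.
Qed.

Definition Ydir_nonneg (l k : nat) (u : R3) : C := Ylm_nonneg l k (scal3 (/ norm3 u) u).

Lemma Ydir_nonneg_eq l m u : Ydir_nonneg l m u =
  (RtoC (Ynorm l m * (-1) ^ m * legendre_deriv l m (dir u X3)) * Cpow (dir u X1, dir u X2) m)%C.
Proof. now destruct u as [[a b] c]. Qed.

Definition dYdir_nonneg (l m : nat) (u : R3) (k : ax) : C :=
  (RtoC (Ynorm l m * (-1) ^ m) *
   (RtoC (legendre_deriv l (S m) (dir u X3) * ddir u X3 k) * Cpow (dir u X1, dir u X2) m
    + RtoC (legendre_deriv l m (dir u X3)) *
      (RtoC (INR m) * Cpow (dir u X1, dir u X2) (pred m) * (ddir u X1 k, ddir u X2 k))))%C.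

Lemma is_Cderive_Ydir_nonneg l m u k : 0 < sqnorm3 u ->
  is_Cderive (fun t => Ydir_nonneg l m (upd u k t)) (coord u k) (dYdir_nonneg l m u k).
Proof.
  intros H.
  apply (is_Cderive_ext (fun t => (RtoC (Ynorm l m * (-1) ^ m) *
     (RtoC (legendre_deriv l m (dir (upd u k t) X3)) *
      Cpow (dir (upd u k t) X1, dir (upd u k t) X2) m))%C)).
  { intros t. rewrite Ydir_nonneg_eq, !RtoC_mult. ring. }
  apply is_Cderive_scal.
  pose proof (is_Cderive_mult (fun t => RtoC (legendre_deriv l m (dir (upd u k t) X3)))
     (fun t => Cpow (dir (upd u k t) X1, dir (upd u k t) X2) m) (coord u k)
     (RtoC (legendre_deriv l (S m) (dir u X3) * ddir u X3 k))
     (RtoC (INR m) * Cpow (dir u X1, dir u X2) (pred m) * (ddir u X1 k, ddir u X2 k))%C) as HM.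
  cbv beta in HM. rewrite !dir_upd_coord in HM. apply HM.
  - apply is_Cderive_RtoC. eapply is_derive_eq.
    + apply (is_derive_Rcomp (legendre_deriv l m) (fun t => dir (upd u k t) X3)).
      * rewrite dir_upd_coord. apply is_derive_legendre_deriv.
      * now apply is_derive_dir_upd.
    + apply Rmult_comm.
  - pose proof (is_Cderive_Cpow (fun t => (dir (upd u k t) X1, dir (upd u k t) X2)) (coord u k)
       (ddir u X1 k, ddir u X2 k) m) as HC.
    cbv beta in HC. rewrite !dir_upd_coord in HC. apply HC.
    apply is_Cderive_pair; now apply is_derive_dir_upd.
Qed.

(* [opA i j] at [u], expressed through the gradient [d] of the function at [u]. *)
Definition ang_mom (u : R3) (i j : ax) (d : ax -> C) : C :=
  ((- Ci) * (RtoC (coord u i) * d j - RtoC (coord u j) * d i))%C.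

Definition ang_raise (u : R3) (d : ax -> C) : C :=
  (ang_mom u X2 X3 d + Ci * ang_mom u X3 X1 d)%C.
Definition ang_lower (u : R3) (d : ax -> C) : C :=
  (ang_mom u X2 X3 d + (- Ci) * ang_mom u X3 X1 d)%C.

Ltac expand_ang l m u H :=
  unfold ang_raise, ang_lower, ang_mom, dYdir_nonneg, ddir;
  rewrite !(coord_dir u _ H);
  unfold kron; simpl ax_eqb; cbv iota;
  pose proof (norm3_pos u H);
  set (x1 := dir u X1) in *; set (x2 := dir u X2) in *; set (x3 := dir u X3) in *;
  set (r := norm3 u) in *;
  set (P' := legendre_deriv l (S m) x3) in *; set (P := legendre_deriv l m x3) in *;
  set (K := Ynorm l m * (-1) ^ m);
  destruct m as [|m];
  [ simpl Cpow; simpl pred; change (INR 0) with 0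
  | simpl pred; change (Cpow (x1, x2) (S m)) with ((x1, x2) * Cpow (x1, x2) m)%C;
    destruct (Cpow (x1, x2) m) as [b1 b2]; set (M := INR (S m)) ].

Lemma ang_mom12_Ydir_nonneg l m u : 0 < sqnorm3 u ->
  ang_mom u X1 X2 (dYdir_nonneg l m u) = (RtoC (INR m) * Ydir_nonneg l m u)%C.
Proof.
  intros H. rewrite Ydir_nonneg_eq. expand_ang l m u H;
  apply injective_projections; simpl; field; lra.
Qed.

Lemma ang_raise_dYdir_nonneg l m u : 0 < sqnorm3 u ->
  ang_raise u (dYdir_nonneg l m u) =
  (- RtoC (Ynorm l m * (-1) ^ m * legendre_deriv l (S m) (dir u X3)) *
   Cpow (dir u X1, dir u X2) (S m))%C.
Proof.
  intros H. change (Cpow (dir u X1, dir u X2) (S m))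
    with ((dir u X1, dir u X2) * Cpow (dir u X1, dir u X2) m)%C.
  expand_ang l m u H; apply injective_projections; simpl; field; lra.
Qed.

Lemma ang_lower_dYdir_nonneg l m u : 0 < sqnorm3 u ->
  ang_lower u (dYdir_nonneg l m u) = (RtoC (Ynorm l m * (-1) ^ m) *
    (RtoC (legendre_deriv l (S m) (dir u X3)) * Cpow (dir u X1, dir u X2) m
       * Cconj (dir u X1, dir u X2)
     - RtoC (2 * INR m * dir u X3 * legendre_deriv l m (dir u X3))
       * Cpow (dir u X1, dir u X2) (pred m)))%C.
Proof.
  intros H. expand_ang l m u H; apply injective_projections; simpl; field; lra.
Qed.

Definition ladder_coef_nat (l k : nat) : R := sqrt (INR ((l - k) * (l + k + 1))).

Definition ladder_coef (l : nat) (m : Z) : R :=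
  sqrt (IZR ((Z.of_nat l - m) * (Z.of_nat l + m + 1))).

Lemma ladder_coef_nat_sqr l k :
  ladder_coef_nat l k * ladder_coef_nat l k = INR (l - k) * INR (l + k + 1).
Proof. unfold ladder_coef_nat. rewrite sqrt_sqrt by apply pos_INR. apply mult_INR. Qed.

Lemma ladder_coef_of_nat l k : (k <= l)%nat -> ladder_coef l (Z.of_nat k) = ladder_coef_nat l k.
Proof.
  intros. unfold ladder_coef, ladder_coef_nat. rewrite INR_IZR_INZ.
  do 2 f_equal. rewrite Nat2Z.inj_mul, Nat2Z.inj_sub, !Nat2Z.inj_add by lia. simpl. lia.
Qed.

Lemma ladder_coef_opp_S l k : (k < l)%nat -> ladder_coef l (- Z.of_nat (S k)) = ladder_coef_nat l k.
Proof.
  intros. unfold ladder_coef, ladder_coef_nat. rewrite INR_IZR_INZ.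
  do 2 f_equal. rewrite Nat2Z.inj_mul, Nat2Z.inj_sub, !Nat2Z.inj_add by lia. simpl. lia.
Qed.

Lemma ladder_coef_top l : ladder_coef l (Z.of_nat l) = 0.
Proof. unfold ladder_coef. rewrite Z.sub_diag. apply sqrt_0. Qed.

Lemma ladder_coef_bottom l : ladder_coef l (- Z.of_nat l - 1) = 0.
Proof.
  unfold ladder_coef. replace (Z.of_nat l + (- Z.of_nat l - 1) + 1)%Z with 0%Z by lia.
  rewrite Z.mul_0_r. apply sqrt_0.
Qed.

Lemma ladder_coef_pos l m : (- Z.of_nat l <= m < Z.of_nat l)%Z -> 0 < ladder_coef l m.
Proof. intros H. unfold ladder_coef. apply sqrt_lt_R0, IZR_lt. nia. Qed.

Lemma Ynorm_step l k : (k < l)%nat -> Ynorm l k = ladder_coef_nat l k * Ynorm l (S k).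
Proof.
  intros Hk. unfold Ynorm, ladder_coef_nat. pose proof PI_RGT_0. rewrite <- sqrt_mult.
  - f_equal.
    replace (l - k)%nat with (S (l - S k)) by lia.
    replace (l + S k)%nat with (S (l + k)) by lia.
    replace (S (l - S k) * (l + k + 1))%nat with (S (l - S k) * S (l + k))%nat by lia.
    rewrite !INR_fact_S, mult_INR.
    pose proof (INR_fact_lt_0 (l - S k)); pose proof (INR_fact_lt_0 (l + k)).
    assert (0 < INR (S (l + k))) by (apply lt_0_INR; lia).
    field. repeat split; lra.
  - apply pos_INR.
  - pose proof (pos_INR l). pose proof (INR_fact_lt_0 (l + S k)).
    apply Rmult_le_pos; [apply Rmult_le_pos |].
    + apply Rdiv_le_0_compat; lra.
    + apply pos_INR.
    + apply Rlt_le, Rinv_0_lt_compat; lra.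
Qed.

Lemma ang_raise_Ydir_nonneg l k u : 0 < sqnorm3 u -> (k < l)%nat ->
  ang_raise u (dYdir_nonneg l k u) = (RtoC (ladder_coef_nat l k) * Ydir_nonneg l (S k) u)%C.
Proof.
  intros H Hk. rewrite ang_raise_dYdir_nonneg, Ydir_nonneg_eq, (Ynorm_step l k Hk) by exact H.
  simpl pow. apply injective_projections; simpl; ring.
Qed.

Lemma ang_raise_Ydir_nonneg_top l u : 0 < sqnorm3 u -> ang_raise u (dYdir_nonneg l l u) = RtoC 0.
Proof.
  intros H. rewrite ang_raise_dYdir_nonneg, legendre_deriv_over by exact H.
  apply injective_projections; simpl; ring.
Qed.

(* The lowering identity is the associated Legendre equation in disguise. *)
Lemma ang_lower_Ydir_nonneg l j u : 0 < sqnorm3 u -> (j < l)%nat ->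
  ang_lower u (dYdir_nonneg l (S j) u) = (RtoC (ladder_coef_nat l j) * Ydir_nonneg l j u)%C.
Proof.
  intros H Hj. rewrite ang_lower_dYdir_nonneg, Ydir_nonneg_eq, (Ynorm_step l j Hj) by exact H.
  pose proof (dir_sqnorm u H) as HN.
  pose proof (legendre_deriv_ode l j (dir u X3) Hj) as E.
  pose proof (ladder_coef_nat_sqr l j) as Hc.
  set (x1 := dir u X1) in *; set (x2 := dir u X2) in *; set (x3 := dir u X3) in *.
  set (P2 := legendre_deriv l (S (S j)) x3) in *.
  set (P1 := legendre_deriv l (S j) x3) in *.
  set (P0 := legendre_deriv l j x3) in *.
  set (c := ladder_coef_nat l j) in *. set (N := Ynorm l (S j)) in *.
  change (Cpow (x1, x2) (S j)) with ((x1, x2) * Cpow (x1, x2) j)%C.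
  simpl pred. destruct (Cpow (x1, x2) j) as [b1 b2].
  set (sj := INR (S j)) in *. set (pp := (-1) ^ j).
  assert (K : (x1 * x1 + x2 * x2) * P2 = 2 * sj * x3 * P1 - c * c * P0).
  { rewrite Hc. replace (x1 * x1 + x2 * x2) with (1 - x3 * x3) by lra. lra. }
  simpl pow. fold pp.
  apply injective_projections; simpl.
  - transitivity (- N * pp * b1 * ((x1 * x1 + x2 * x2) * P2 - 2 * sj * x3 * P1 + c * c * P0)
       + c * c * N * pp * P0 * b1); [ring |]. rewrite K. ring.
  - transitivity (- N * pp * b2 * ((x1 * x1 + x2 * x2) * P2 - 2 * sj * x3 * P1 + c * c * P0)
       + c * c * N * pp * P0 * b2); [ring |]. rewrite K. ring.
Qed.

Ltac destruct_grad d :=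
  destruct (d X1) as [a1 a2]; destruct (d X2) as [b1 b2]; destruct (d X3) as [c1 c2].

Lemma ang_raise_conj u d : ang_raise u (fun k => Cconj (d k)) = (- Cconj (ang_lower u d))%C.
Proof.
  unfold ang_raise, ang_lower, ang_mom. destruct_grad d.
  apply injective_projections; simpl; ring.
Qed.

Lemma ang_lower_conj u d : ang_lower u (fun k => Cconj (d k)) = (- Cconj (ang_raise u d))%C.
Proof.
  unfold ang_raise, ang_lower, ang_mom. destruct_grad d.
  apply injective_projections; simpl; ring.
Qed.

Lemma ang_mom12_conj u d : ang_mom u X1 X2 (fun k => Cconj (d k)) = (- Cconj (ang_mom u X1 X2 d))%C.
Proof. unfold ang_mom. destruct_grad d. apply injective_projections; simpl; ring. Qed.

Lemma ang_raise_scal u c d : ang_raise u (fun k => c * d k)%C = (c * ang_raise u d)%C.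
Proof. unfold ang_raise, ang_mom. ring. Qed.

Lemma ang_lower_scal u c d : ang_lower u (fun k => c * d k)%C = (c * ang_lower u d)%C.
Proof. unfold ang_lower, ang_mom. ring. Qed.

Lemma ang_mom12_scal u c d : ang_mom u X1 X2 (fun k => c * d k)%C = (c * ang_mom u X1 X2 d)%C.
Proof. unfold ang_mom. ring. Qed.

Lemma ang_lower_dYdir_nonneg_0 l u :
  ang_lower u (dYdir_nonneg l 0 u) = (- Cconj (ang_raise u (dYdir_nonneg l 0 u)))%C.
Proof.
  rewrite <- ang_lower_conj. f_equal. apply functional_extensionality; intros k.
  unfold dYdir_nonneg. simpl Cpow. change (INR 0) with 0.
  apply injective_projections; simpl; ring.
Qed.

Definition Ydir (l : nat) (m : Z) (u : R3) : C := Ylm l m (scal3 (/ norm3 u) u).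

Definition dYdir (l : nat) (m : Z) (u : R3) (k : ax) : C :=
  if (0 <=? m)%Z then dYdir_nonneg l (Z.to_nat m) u k
  else (RtoC ((-1) ^ Z.abs_nat m) * Cconj (dYdir_nonneg l (Z.abs_nat m) u k))%C.

Lemma is_Cderive_Ydir l m u k : 0 < sqnorm3 u ->
  is_Cderive (fun t => Ydir l m (upd u k t)) (coord u k) (dYdir l m u k).
Proof.
  intros H. unfold Ydir, dYdir, Ylm. destruct (0 <=? m)%Z.
  - now apply is_Cderive_Ydir_nonneg.
  - now apply is_Cderive_scal, is_Cderive_conj, is_Cderive_Ydir_nonneg.
Qed.

Lemma Z_of_nat_or_opp_S (m : Z) : (exists k, m = Z.of_nat k) \/ (exists k, m = - Z.of_nat (S k))%Z.
Proof.
  destruct (Z_le_gt_dec 0 m).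
  - left. exists (Z.to_nat m). lia.
  - right. exists (pred (Z.to_nat (- m))). lia.
Qed.

Lemma Ydir_of_nat l k u : Ydir l (Z.of_nat k) u = Ydir_nonneg l k u.
Proof.
  unfold Ydir, Ydir_nonneg, Ylm.
  replace (0 <=? Z.of_nat k)%Z with true by (symmetry; apply Z.leb_le; lia).
  now rewrite Nat2Z.id.
Qed.

Lemma Ydir_opp_nat l k u :
  Ydir l (- Z.of_nat k) u = (RtoC ((-1) ^ k) * Cconj (Ydir_nonneg l k u))%C.
Proof.
  unfold Ydir, Ydir_nonneg, Ylm. destruct k as [|k].
  - destruct u as [[x y] z]. simpl. apply injective_projections; simpl; ring.
  - replace (0 <=? - Z.of_nat (S k))%Z with false by (symmetry; apply Z.leb_gt; lia).
    now replace (Z.abs_nat (- Z.of_nat (S k))) with (S k) by lia.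
Qed.

Lemma dYdir_of_nat l k u : dYdir l (Z.of_nat k) u = dYdir_nonneg l k u.
Proof.
  apply functional_extensionality; intros kk. unfold dYdir.
  replace (0 <=? Z.of_nat k)%Z with true by (symmetry; apply Z.leb_le; lia). now rewrite Nat2Z.id.
Qed.

Lemma dYdir_opp_S l k u : dYdir l (- Z.of_nat (S k)) u =
  (fun kk => RtoC ((-1) ^ S k) * Cconj (dYdir_nonneg l (S k) u kk))%C.
Proof.
  apply functional_extensionality; intros kk. unfold dYdir.
  replace (0 <=? - Z.of_nat (S k))%Z with false by (symmetry; apply Z.leb_gt; lia).
  now replace (Z.abs_nat (- Z.of_nat (S k))) with (S k) by lia.
Qed.

Lemma ang_mom12_Ydir l m u : 0 < sqnorm3 u ->
  ang_mom u X1 X2 (dYdir l m u) = (RtoC (IZR m) * Ydir l m u)%C.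
Proof.
  intros H. destruct (Z_of_nat_or_opp_S m) as [[k ->] | [k ->]].
  - rewrite dYdir_of_nat, Ydir_of_nat, ang_mom12_Ydir_nonneg, <- INR_IZR_INZ by exact H.
    reflexivity.
  - rewrite dYdir_opp_S, Ydir_opp_nat, ang_mom12_scal, ang_mom12_conj, ang_mom12_Ydir_nonneg
      by exact H.
    destruct (Ydir_nonneg l (S k) u) as [y1 y2].
    rewrite opp_IZR, <- INR_IZR_INZ. apply injective_projections; simpl; ring.
Qed.

Lemma ang_raise_Ydir l m u : 0 < sqnorm3 u -> (Z.abs m <= Z.of_nat l)%Z ->
  ang_raise u (dYdir l m u) = (RtoC (ladder_coef l m) * Ydir l (m + 1) u)%C.
Proof.
  intros H Hm. destruct (Z_of_nat_or_opp_S m) as [[k ->] | [k ->]].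
  - rewrite dYdir_of_nat. replace (Z.of_nat k + 1)%Z with (Z.of_nat (S k)) by lia.
    rewrite Ydir_of_nat. destruct (Nat.eq_dec k l) as [-> | Hk].
    + rewrite ang_raise_Ydir_nonneg_top, ladder_coef_top by exact H.
      apply injective_projections; simpl; ring.
    + rewrite ang_raise_Ydir_nonneg, ladder_coef_of_nat by (auto; lia). reflexivity.
  - rewrite dYdir_opp_S, ang_raise_scal, ang_raise_conj, ang_lower_Ydir_nonneg by (auto; lia).
    replace (- Z.of_nat (S k) + 1)%Z with (- Z.of_nat k)%Z by lia.
    rewrite Ydir_opp_nat, ladder_coef_opp_S by lia.
    destruct (Ydir_nonneg l k u) as [y1 y2]. simpl pow.
    apply injective_projections; simpl; ring.
Qed.

Lemma ang_lower_Ydir l m u : 0 < sqnorm3 u -> (Z.abs m <= Z.of_nat l)%Z ->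
  ang_lower u (dYdir l m u) = (RtoC (ladder_coef l (m - 1)) * Ydir l (m - 1) u)%C.
Proof.
  intros H Hm. destruct (Z_of_nat_or_opp_S m) as [[[|k] ->] | [k ->]].
  - rewrite dYdir_of_nat, ang_lower_dYdir_nonneg_0.
    replace (Z.of_nat 0 - 1)%Z with (- Z.of_nat 1)%Z by lia.
    rewrite Ydir_opp_nat. destruct (Nat.eq_dec l 0) as [-> | Hl].
    + rewrite ang_raise_Ydir_nonneg_top by exact H. unfold ladder_coef. simpl. rewrite sqrt_0.
      apply injective_projections; simpl; ring.
    + rewrite ang_raise_Ydir_nonneg, ladder_coef_opp_S by (auto; lia).
      destruct (Ydir_nonneg l 1 u) as [y1 y2]. apply injective_projections; simpl; ring.
  - rewrite dYdir_of_nat, ang_lower_Ydir_nonneg by (auto; lia).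
    replace (Z.of_nat (S k) - 1)%Z with (Z.of_nat k) by lia.
    rewrite Ydir_of_nat, ladder_coef_of_nat by lia. reflexivity.
  - rewrite dYdir_opp_S, ang_lower_scal, ang_lower_conj.
    replace (- Z.of_nat (S k) - 1)%Z with (- Z.of_nat (S (S k)))%Z by lia.
    rewrite Ydir_opp_nat. destruct (Nat.eq_dec (S k) l) as [<- | Hk].
    + rewrite ang_raise_Ydir_nonneg_top by exact H.
      replace (- Z.of_nat (S (S k)))%Z with (- Z.of_nat (S k) - 1)%Z by lia.
      rewrite ladder_coef_bottom. apply injective_projections; simpl; ring.
    + rewrite ang_raise_Ydir_nonneg, ladder_coef_opp_S by (auto; lia).
      destruct (Ydir_nonneg l (S (S k)) u) as [y1 y2]. simpl pow.
      apply injective_projections; simpl; ring.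
Qed.

(** * The operators [A_ij] and [B_ij] on the functions [Psi_lmn] *)

Lemma Psi_Ydir l m n u v :
  Psi l m n u v = (RtoC (sph_bessel_j l (norm3 u * norm3 v)) * Ydir l m u * Ydir l n v)%C.
Proof. reflexivity. Qed.

Lemma du_Psi l m n u v k : 0 < sqnorm3 u ->
  du k (Psi l m n) u v =
  ((RtoC (Derive (sph_bessel_j l) (norm3 u * norm3 v) * (norm3 v / norm3 u)) * RtoC (coord u k)
     * Ydir l m u + RtoC (sph_bessel_j l (norm3 u * norm3 v)) * dYdir l m u k) * Ydir l n v)%C.
Proof.
  intros H. pose proof (norm3_pos u H). apply is_Cderive_unique.
  set (rad := fun t => RtoC (sph_bessel_j l (norm3 (upd u k t) * norm3 v))).
  apply (is_Cderive_ext (fun t => (rad t * Ydir l m (upd u k t)) * Ydir l n v)%C);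
    [reflexivity |].
  eapply is_Cderive_eq; [apply is_Cderive_mult; [apply is_Cderive_mult |] | ].
  - apply is_Cderive_RtoC. eapply is_derive_eq.
    + apply (is_derive_Rcomp (sph_bessel_j l) (fun t => norm3 (upd u k t) * norm3 v)).
      * rewrite upd_coord. apply Derive_correct, ex_derive_sph_bessel_j.
      * apply (is_derive_Rmult (fun t => norm3 (upd u k t)) (fun _ => norm3 v)).
        -- now apply is_derive_norm3_upd.
        -- apply is_derive_Rconst.
    + reflexivity.
  - now apply is_Cderive_Ydir.
  - apply is_Cderive_const.
  - unfold rad. rewrite upd_coord. apply injective_projections; simpl; field; lra.
Qed.

Lemma opA_Psi l m n u v i j : 0 < sqnorm3 u ->
  opA i j (Psi l m n) u v =
  (RtoC (sph_bessel_j l (norm3 u * norm3 v)) * ang_mom u i j (dYdir l m u) * Ydir l n v)%C.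
Proof. intros H. unfold opA. rewrite !du_Psi by exact H. unfold ang_mom. ring. Qed.

Lemma opA_origin f i j v : opA i j f ((0, 0), 0) v = RtoC 0.
Proof. unfold opA. destruct i, j; simpl coord; apply injective_projections; simpl; ring. Qed.

Lemma Psi_origin l m n v : (0 < l)%nat -> Psi l m n ((0, 0), 0) v = RtoC 0.
Proof. intros H. rewrite Psi_Ydir, norm3_origin, Rmult_0_l, sph_bessel_j_0 by exact H. ring. Qed.

Definition raise (T : ax -> ax -> PhysFun -> PhysFun) (f : PhysFun) : PhysFun :=
  Fadd (T X2 X3 f) (Fscal Ci (T X3 X1 f)).

Definition lower (T : ax -> ax -> PhysFun -> PhysFun) (f : PhysFun) : PhysFun :=
  Fadd (T X2 X3 f) (Fscal (- Ci) (T X3 X1 f)).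

Lemma PhysFun_ext (f g : PhysFun) : (forall u v, f u v = g u v) -> f = g.
Proof. intros H. do 2 (apply functional_extensionality; intro). apply H. Qed.

(* At [u = 0] both sides vanish: [opA] has the factor [u], and [Psi] the factor [j_l 0]
   unless [l = 0], where the ladder coefficients vanish. *)
Lemma raise_opA_Psi l m n : valid_idx l m n ->
  raise opA (Psi l m n) = Fscal (RtoC (ladder_coef l m)) (Psi l (m + 1) n).
Proof.
  intros [Hm Hn]. apply PhysFun_ext; intros u v. unfold raise, Fadd, Fscal.
  destruct (Rlt_dec 0 (sqnorm3 u)) as [H | H].
  - rewrite !opA_Psi, (Psi_Ydir l (m + 1)) by exact H.
    transitivity (RtoC (sph_bessel_j l (norm3 u * norm3 v)) * ang_raise u (dYdir l m u)
      * Ydir l n v)%C; [unfold ang_raise; ring |].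
    rewrite (ang_raise_Ydir l m u H Hm). ring.
  - apply sqnorm3_eq0 in H. subst u. rewrite !opA_origin.
    destruct l as [|l].
    + replace m with 0%Z by lia. rewrite ladder_coef_top. ring.
    + rewrite Psi_origin by lia. ring.
Qed.

Lemma lower_opA_Psi l m n : valid_idx l m n ->
  lower opA (Psi l m n) = Fscal (RtoC (ladder_coef l (m - 1))) (Psi l (m - 1) n).
Proof.
  intros [Hm Hn]. apply PhysFun_ext; intros u v. unfold lower, Fadd, Fscal.
  destruct (Rlt_dec 0 (sqnorm3 u)) as [H | H].
  - rewrite !opA_Psi, (Psi_Ydir l (m - 1)) by exact H.
    transitivity (RtoC (sph_bessel_j l (norm3 u * norm3 v)) * ang_lower u (dYdir l m u)
      * Ydir l n v)%C; [unfold ang_lower; ring |].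
    rewrite (ang_lower_Ydir l m u H Hm). ring.
  - apply sqnorm3_eq0 in H. subst u. rewrite !opA_origin.
    destruct l as [|l].
    + replace m with 0%Z by lia. unfold ladder_coef. simpl. rewrite sqrt_0. ring.
    + rewrite Psi_origin by lia. ring.
Qed.

Lemma opA12_Psi l m n : valid_idx l m n ->
  opA X1 X2 (Psi l m n) = Fscal (RtoC (IZR m)) (Psi l m n).
Proof.
  intros [Hm Hn]. apply PhysFun_ext; intros u v. unfold Fscal.
  destruct (Rlt_dec 0 (sqnorm3 u)) as [H | H].
  - rewrite opA_Psi, (Psi_Ydir l m), (ang_mom12_Ydir l m u H) by exact H. ring.
  - apply sqnorm3_eq0 in H. subst u. rewrite opA_origin.
    destruct l as [|l].
    + replace m with 0%Z by lia. simpl IZR. ring.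
    + rewrite Psi_origin by lia. ring.
Qed.

Definition swap_args (f : PhysFun) : PhysFun := fun u v => f v u.

Lemma opB_swap i j f u v : opB i j f u v = opA i j (swap_args f) v u.
Proof. reflexivity. Qed.

Lemma Psi_swap l m n : swap_args (Psi l m n) = Psi l n m.
Proof. apply PhysFun_ext; intros u v. unfold swap_args. rewrite !Psi_Ydir, Rmult_comm. ring. Qed.

Lemma raise_opB_Psi l m n : valid_idx l m n ->
  raise opB (Psi l m n) = Fscal (RtoC (ladder_coef l n)) (Psi l m (n + 1)).
Proof.
  intros [Hm Hn]. apply PhysFun_ext; intros u v.
  pose proof (f_equal (fun F => F v u) (raise_opA_Psi l n m (conj Hn Hm))) as E.
  unfold raise, Fadd, Fscal in *. rewrite !opB_swap, !Psi_swap, E, <- Psi_swap. reflexivity.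
Qed.

Lemma lower_opB_Psi l m n : valid_idx l m n ->
  lower opB (Psi l m n) = Fscal (RtoC (ladder_coef l (n - 1))) (Psi l m (n - 1)).
Proof.
  intros [Hm Hn]. apply PhysFun_ext; intros u v.
  pose proof (f_equal (fun F => F v u) (lower_opA_Psi l n m (conj Hn Hm))) as E.
  unfold lower, Fadd, Fscal in *. rewrite !opB_swap, !Psi_swap, E, <- Psi_swap. reflexivity.
Qed.

Lemma opB12_Psi l m n : valid_idx l m n ->
  opB X1 X2 (Psi l m n) = Fscal (RtoC (IZR n)) (Psi l m n).
Proof.
  intros [Hm Hn]. apply PhysFun_ext; intros u v.
  pose proof (f_equal (fun F => F v u) (opA12_Psi l n m (conj Hn Hm))) as E.
  unfold Fscal in *. rewrite !opB_swap, !Psi_swap, E, <- Psi_swap. reflexivity.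
Qed.

(** * Closed form of [Psi_(l+e),l,l] for [e <= 2] *)

(* [P_(l+e)^(l)] is a polynomial of degree [e]: these are the leading constant and the
   normalised polynomial. *)
Definition legendre_top_coef (e l : nat) : R :=
  match e with
  | 0%nat => INR (fact (2 * l)) / (2 ^ l * INR (fact l))
  | 1%nat => INR (fact (2 * l + 2)) / (2 ^ S l * INR (fact (S l)))
  | _ => INR (S (S l)) * INR (fact (2 * l + 2)) / (2 ^ S (S l) * INR (fact (S (S l))))
  end.

Definition legendre_top_poly (e l : nat) (z : R) : R :=
  match e with 0%nat => 1 | 1%nat => z | _ => (2 * INR l + 3) * z * z - 1 end.

Lemma legendre_deriv_top e l z : (e <= 2)%nat ->
  legendre_deriv (l + e) l z = legendre_top_coef e l * legendre_top_poly e l z.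
Proof.
  intros He. unfold legendre_deriv.
  assert (H2 : forall k, INR (fact k) <> 0 /\ 2 ^ k <> 0).
  { intros k. split; [apply INR_fact_neq_0 | apply pow_nonzero; lra]. }
  destruct e as [|[|[|e]]]; try lia; simpl legendre_top_poly; unfold legendre_top_coef.
  - rewrite Nat.add_0_r. replace (l + l)%nat with (2 * l)%nat by lia.
    fold (rodrigues_deriv l (2 * l) z). rewrite rodrigues_deriv_top. field. apply H2.
  - replace (l + 1)%nat with (S l) by lia. replace (S l + l)%nat with (S (2 * l)) by lia.
    fold (rodrigues_deriv (S l) (S (2 * l)) z). rewrite rodrigues_deriv_top1. field. apply H2.
  - replace (l + 2)%nat with (S (S l)) by lia.
    replace (S (S l) + l)%nat with (2 * l + 2)%nat by lia.
    fold (rodrigues_deriv (S (S l)) (2 * l + 2) z). rewrite rodrigues_deriv_top2. field. apply H2.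
Qed.

Lemma legendre_top_coef_pos e l : 0 < legendre_top_coef e l.
Proof.
  assert (H2 : forall k, 0 < 2 ^ k * INR (fact k)).
  { intros k. pose proof (INR_fact_lt_0 k). apply Rmult_lt_0_compat; [apply pow_lt |]; lra. }
  pose proof (INR_fact_lt_0 (2 * l)). pose proof (INR_fact_lt_0 (2 * l + 2)).
  assert (0 < INR (S (S l))) by (apply lt_0_INR; lia).
  destruct e as [|[|e]]; apply Rdiv_lt_0_compat; auto. now apply Rmult_lt_0_compat.
Qed.

(* [|u|^e legendre_top_poly e l (u_3 / |u|)], written as a polynomial in [u]. *)
Definition top_poly (e l : nat) (u : R3) : R :=
  match e with
  | 0%nat => 1
  | 1%nat => coord u X3
  | _ => (2 * INR l + 3) * coord u X3 * coord u X3 - sqnorm3 u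
  end.

Lemma top_poly_dir e l u : (e <= 2)%nat -> 0 < sqnorm3 u ->
  top_poly e l u = norm3 u ^ e * legendre_top_poly e l (dir u X3).
Proof.
  intros He H. pose proof (norm3_pos u H). pose proof (norm3_sqr u).
  destruct e as [|[|[|e]]]; try lia; unfold top_poly, legendre_top_poly, dir; simpl.
  - ring.
  - field. lra.
  - rewrite <- H1. field. lra.
Qed.

Definition hpow (u : R3) (l : nat) : C := Cpow (coord u X1, coord u X2) l.

Lemma Cpow_scal (s a b : R) n : Cpow (s * a, s * b) n = (RtoC (s ^ n) * Cpow (a, b) n)%C.
Proof.
  induction n as [|n IH]; simpl Cpow; [apply injective_projections; simpl; ring |].
  rewrite IH. destruct (Cpow (a, b) n) as [p1 p2]. apply injective_projections; simpl; ring.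
Qed.

Lemma hpow_upd3 u t l : hpow (upd u X3 t) l = hpow u l.
Proof. now destruct u as [[a b] c]. Qed.

Definition hform (l : nat) (G : R3 -> R3 -> R) : PhysFun :=
  fun u v => (RtoC (G u v) * (hpow u l * hpow v l))%C.

Definition top_coef (e l : nat) : R := (Ynorm (l + e) l * (-1) ^ l * legendre_top_coef e l) ^ 2.

Definition top_radial (e l : nat) (u v : R3) : R :=
  top_coef e l * 2 ^ (l + e) * bessel_h (l + e) (sqnorm3 u * sqnorm3 v)
  * top_poly e l u * top_poly e l v.

Definition top_state (e l : nat) : PhysFun := hform l (top_radial e l).

Lemma Ydir_top e l u : (e <= 2)%nat -> 0 < sqnorm3 u ->
  Ydir (l + e) (Z.of_nat l) u =
  (RtoC (Ynorm (l + e) l * (-1) ^ l * legendre_top_coef e l * legendre_top_poly e l (dir u X3)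
         * (/ norm3 u) ^ l) * hpow u l)%C.
Proof.
  intros He H. rewrite Ydir_of_nat, Ydir_nonneg_eq, legendre_deriv_top by exact He.
  unfold dir at 2 3. rewrite Cpow_scal. unfold hpow. rewrite !RtoC_mult. ring.
Qed.

Lemma Psi_top_state_pos e l u v : (e <= 2)%nat -> 0 < sqnorm3 u -> 0 < sqnorm3 v ->
  Psi (l + e) (Z.of_nat l) (Z.of_nat l) u v = top_state e l u v.
Proof.
  intros He Hu Hv. rewrite Psi_Ydir, !Ydir_top by assumption.
  unfold top_state, hform, top_radial, top_coef.
  rewrite (top_poly_dir e l u He Hu), (top_poly_dir e l v He Hv), sph_bessel_j_h.
  pose proof (norm3_pos u Hu). pose proof (norm3_pos v Hv).
  replace ((norm3 u * norm3 v) ^ 2) with (sqnorm3 u * sqnorm3 v)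
    by (rewrite <- !norm3_sqr; ring).
  set (r := norm3 u) in *. set (s := norm3 v) in *.
  rewrite !pow_inv, Rpow_mult_distr, !pow_add.
  assert (r ^ l <> 0) by (apply pow_nonzero; lra).
  assert (s ^ l <> 0) by (apply pow_nonzero; lra).
  set (rl := r ^ l) in *. set (sl := s ^ l) in *.
  destruct (hpow u l) as [w1 w2]. destruct (hpow v l) as [z1 z2].
  apply injective_projections; simpl; field; repeat split; lra.
Qed.

Lemma top_state_sym e l u v : top_state e l u v = top_state e l v u.
Proof.
  unfold top_state, hform, top_radial. rewrite (Rmult_comm (sqnorm3 u)), !RtoC_mult. ring.
Qed.

Lemma Psi_top_state_origin e l v : (e <= 2)%nat ->
  Psi (l + e) (Z.of_nat l) (Z.of_nat l) ((0, 0), 0) v = top_state e l ((0, 0), 0) v.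
Proof.
  intros He. unfold top_state, hform, top_radial.
  destruct (Nat.eq_dec (l + e) 0) as [E0 | E0].
  - assert (l = 0%nat) by lia. assert (e = 0%nat) by lia. subst. simpl Nat.add.
    rewrite Psi_Ydir. unfold Ydir. change (Ylm 0 (Z.of_nat 0) ?w) with (Ylm_nonneg 0 0 w).
    fold (Ydir_nonneg 0 0 ((0, 0), 0)) (Ydir_nonneg 0 0 v). rewrite !Ydir_nonneg_eq.
    unfold legendre_deriv, top_coef, legendre_top_coef, top_poly, hpow.
    rewrite norm3_origin, sqnorm3_origin, Rmult_0_l, sph_bessel_j_h. simpl.
    replace (0 * (0 * 1)) with 0 by ring. replace (1 / (1 * 1)) with 1 by field.
    rewrite Rmult_0_l. apply injective_projections; simpl; ring.
  - rewrite Psi_origin by lia.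
    destruct l as [|l].
    + destruct e as [|[|[|e]]]; try lia; unfold top_poly; simpl coord; rewrite ?sqnorm3_origin;
        apply injective_projections; simpl; ring.
    + unfold hpow. simpl coord. simpl Cpow. apply injective_projections; simpl; ring.
Qed.

Lemma Psi_top_state e l : (e <= 2)%nat -> Psi (l + e) (Z.of_nat l) (Z.of_nat l) = top_state e l.
Proof.
  intros He. apply PhysFun_ext; intros u v.
  destruct (Rlt_dec 0 (sqnorm3 u)) as [Hu | Hu]; [destruct (Rlt_dec 0 (sqnorm3 v)) as [Hv | Hv] |].
  - now apply Psi_top_state_pos.
  - apply sqnorm3_eq0 in Hv. subst v.
    rewrite <- Psi_swap. unfold swap_args. rewrite Psi_top_state_origin by exact He.
    apply top_state_sym.
  - apply sqnorm3_eq0 in Hu. subst u. now apply Psi_top_state_origin.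
Qed.

Lemma top_coef_sqr e l : top_coef e l = Ynorm (l + e) l * Ynorm (l + e) l *
  (legendre_top_coef e l * legendre_top_coef e l).
Proof.
  assert (Hs : (-1) ^ l * (-1) ^ l = 1).
  { rewrite <- Rpow_mult_distr. replace (-1 * -1) with 1 by ring. apply pow1. }
  unfold top_coef.
  transitivity (Ynorm (l + e) l * Ynorm (l + e) l * (legendre_top_coef e l * legendre_top_coef e l)
    * ((-1) ^ l * (-1) ^ l)); [ring |].
  rewrite Hs. ring.
Qed.

Lemma top_coef_pos e l : 0 < top_coef e l.
Proof.
  unfold top_coef. apply pow2_gt_0.
  apply Rmult_integral_contrapositive; split; [apply Rmult_integral_contrapositive; split |].
  - unfold Ynorm. apply Rgt_not_eq, sqrt_lt_R0.
    pose proof PI_RGT_0. pose proof (pos_INR (l + e)).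
    pose proof (INR_fact_lt_0 (l + e - l)). pose proof (INR_fact_lt_0 (l + e + l)).
    apply Rmult_lt_0_compat; [apply Rmult_lt_0_compat |].
    + apply Rdiv_lt_0_compat; lra.
    + lra.
    + apply Rinv_0_lt_compat; lra.
  - apply pow_nonzero. lra.
  - apply Rgt_not_eq, legendre_top_coef_pos.
Qed.

Lemma top_coef_1 l : top_coef 1 l = (2 * INR l + 3) * top_coef 0 l.
Proof.
  rewrite !top_coef_sqr, !Ynorm_sqr by lia.
  replace (l + 1 - l)%nat with 1%nat by lia. replace (l + 0 - l)%nat with 0%nat by lia.
  replace (l + 1 + l)%nat with (S (2 * l)) by lia. replace (l + 0 + l)%nat with (2 * l)%nat by lia.
  unfold legendre_top_coef. replace (2 * l + 2)%nat with (S (S (2 * l))) by lia.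
  rewrite !INR_fact_S. replace (l + 1)%nat with (S l) by lia.
  pose proof (INR_fact_lt_0 (2 * l)). pose proof (INR_fact_lt_0 l). pose proof PI_RGT_0.
  set (F1 := INR (fact (2 * l))) in *. set (F2 := INR (fact l)) in *.
  rewrite !S_INR, !mult_INR, !plus_INR. simpl INR. simpl pow.
  assert (0 <= INR l) by apply pos_INR.
  assert (0 < 2 ^ l) by (apply pow_lt; lra).
  field. repeat split; lra.
Qed.

(** * The operator [C_33] on the closed forms *)

Lemma du3_hform (G G3 : R3 -> R3 -> R) l :
  (forall u v, is_derive (fun t => G (upd u X3 t) v) (coord u X3) (G3 u v)) ->
  du X3 (hform l G) = hform l G3.
Proof.
  intros HG. apply PhysFun_ext; intros u v. apply is_Cderive_unique.
  apply (is_Cderive_ext (fun t => (RtoC (G (upd u X3 t) v) * (hpow u l * hpow v l))%C)).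
  { intros; unfold hform; now rewrite hpow_upd3. }
  eapply is_Cderive_eq.
  - exact (is_Cderive_mult _ _ _ _ _ (is_Cderive_RtoC _ _ _ (HG u v)) (is_Cderive_const _ _)).
  - unfold hform. ring.
Qed.

Lemma dv3_hform (G G3 : R3 -> R3 -> R) l :
  (forall u v, is_derive (fun t => G u (upd v X3 t)) (coord v X3) (G3 u v)) ->
  dv X3 (hform l G) = hform l G3.
Proof.
  intros HG. apply PhysFun_ext; intros u v. apply is_Cderive_unique.
  apply (is_Cderive_ext (fun t => (RtoC (G u (upd v X3 t)) * (hpow u l * hpow v l))%C)).
  { intros; unfold hform; now rewrite hpow_upd3. }
  eapply is_Cderive_eq.
  - exact (is_Cderive_mult _ _ _ _ _ (is_Cderive_RtoC _ _ _ (HG u v)) (is_Cderive_const _ _)).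
  - unfold hform. ring.
Qed.

Definition top_radial0_dv3 (l : nat) (u v : R3) : R :=
  top_coef 0 l * 2 ^ (l + 0) * (- bessel_h (S (l + 0)) (sqnorm3 u * sqnorm3 v))
  * (sqnorm3 u * (2 * coord v X3)).

Definition top_radial0_du3dv3 (l : nat) (u v : R3) : R :=
  top_coef 0 l * 2 ^ (l + 0) *
  (bessel_h (S (S (l + 0))) (sqnorm3 u * sqnorm3 v) * (2 * coord u X3 * sqnorm3 v)
     * (sqnorm3 u * (2 * coord v X3))
   - bessel_h (S (l + 0)) (sqnorm3 u * sqnorm3 v) * (2 * coord u X3 * (2 * coord v X3))).

Definition top_radial1_dv3 (l : nat) (u v : R3) : R :=
  top_coef 1 l * 2 ^ (l + 1) *
  (- bessel_h (S (l + 1)) (sqnorm3 u * sqnorm3 v) * (sqnorm3 u * (2 * coord v X3))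
     * coord u X3 * coord v X3
   + bessel_h (l + 1) (sqnorm3 u * sqnorm3 v) * coord u X3).

Definition top_radial1_du3dv3 (l : nat) (u v : R3) : R :=
  top_coef 1 l * 2 ^ (l + 1) *
  (bessel_h (S (S (l + 1))) (sqnorm3 u * sqnorm3 v) * (2 * coord u X3 * sqnorm3 v)
     * (sqnorm3 u * (2 * coord v X3)) * coord u X3 * coord v X3
   - bessel_h (S (l + 1)) (sqnorm3 u * sqnorm3 v) * (2 * coord u X3) * (2 * coord v X3)
     * coord u X3 * coord v X3
   - bessel_h (S (l + 1)) (sqnorm3 u * sqnorm3 v) * (sqnorm3 u * (2 * coord v X3)) * coord v X3
   - bessel_h (S (l + 1)) (sqnorm3 u * sqnorm3 v) * (2 * coord u X3 * sqnorm3 v) * coord u X3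
   + bessel_h (l + 1) (sqnorm3 u * sqnorm3 v)).

Ltac derive_radial :=
  intros [[? ?] ?] [[? ?] ?];
  unfold top_radial, top_radial0_dv3, top_radial0_du3dv3, top_radial1_dv3, top_radial1_du3dv3,
    top_poly, sqnorm3; simpl;
  auto_derive; [repeat split; apply ex_derive_bessel_h | rewrite !Derive_bessel_h; ring].

Lemma is_derive_top_radial0_v3 l u v :
  is_derive (fun t => top_radial 0 l u (upd v X3 t)) (coord v X3) (top_radial0_dv3 l u v).
Proof. revert u v; derive_radial. Qed.

Lemma is_derive_top_radial0_u3v3 l u v :
  is_derive (fun t => top_radial0_dv3 l (upd u X3 t) v) (coord u X3) (top_radial0_du3dv3 l u v).
Proof. revert u v; derive_radial. Qed.

Lemma is_derive_top_radial1_v3 l u v :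
  is_derive (fun t => top_radial 1 l u (upd v X3 t)) (coord v X3) (top_radial1_dv3 l u v).
Proof. revert u v; derive_radial. Qed.

Lemma is_derive_top_radial1_u3v3 l u v :
  is_derive (fun t => top_radial1_dv3 l (upd u X3 t) v) (coord u X3) (top_radial1_du3dv3 l u v).
Proof. revert u v; derive_radial. Qed.

Lemma opC33_hform l (G Gv Guv : R3 -> R3 -> R) :
  (forall u v, is_derive (fun t => G u (upd v X3 t)) (coord v X3) (Gv u v)) ->
  (forall u v, is_derive (fun t => Gv (upd u X3 t) v) (coord u X3) (Guv u v)) ->
  opC X3 X3 (hform l G) = hform l (fun u v => coord u X3 * coord v X3 * G u v + Guv u v).
Proof.
  intros HGv HGuv. apply PhysFun_ext; intros u v. unfold opC.
  rewrite (dv3_hform _ _ l HGv), (du3_hform _ _ l HGuv).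
  unfold hform. rewrite RtoC_plus, !RtoC_mult. ring.
Qed.

Lemma hform_ext l (G G' : R3 -> R3 -> R) : (forall u v, G u v = G' u v) -> hform l G = hform l G'.
Proof. intros H. apply PhysFun_ext; intros u v. unfold hform. now rewrite H. Qed.

Lemma Fscal_hform l c G : Fscal (RtoC c) (hform l G) = hform l (fun u v => c * G u v).
Proof. apply PhysFun_ext; intros u v. unfold Fscal, hform. rewrite RtoC_mult. ring. Qed.

Lemma Fadd_hform l G G' : Fadd (hform l G) (hform l G') = hform l (fun u v => G u v + G' u v).
Proof. apply PhysFun_ext; intros u v. unfold Fadd, hform. rewrite RtoC_plus. ring. Qed.

(* Both identities reduce to the Bessel recurrence [bessel_h_rec]. *)
Lemma opC33_top_state0 l :
  opC X3 X3 (top_state 0 l) = Fscal (RtoC ((2 * INR l + 1) / (2 * INR l + 3))) (top_state 1 l).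
Proof.
  unfold top_state. rewrite (opC33_hform l _ _ _ (is_derive_top_radial0_v3 l)
    (is_derive_top_radial0_u3v3 l)), Fscal_hform.
  apply hform_ext; intros u v.
  unfold top_radial, top_radial0_du3dv3, top_poly. rewrite top_coef_1.
  rewrite Nat.add_0_r. replace (l + 1)%nat with (S l) by lia.
  pose proof (bessel_h_rec l (sqnorm3 u * sqnorm3 v)) as R.
  assert (0 <= INR l) by apply pos_INR.
  set (K := top_coef 0 l) in *. set (Q := sqnorm3 u * sqnorm3 v) in *.
  set (h0 := bessel_h l Q) in *. set (h1 := bessel_h (S l) Q) in *.
  set (h2 := bessel_h (S (S l)) Q) in *.
  simpl pow.
  transitivity ((2 * INR l + 1) / (2 * INR l + 3) *
      ((2 * INR l + 3) * K * (2 * 2 ^ l) * h1 * coord u X3 * coord v X3)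
    + K * 2 ^ l * coord u X3 * coord v X3 * (h0 + 4 * Q * h2 - 2 * (2 * INR l + 3) * h1)).
  - unfold Q. field. lra.
  - replace (h0 + 4 * Q * h2 - 2 * (2 * INR l + 3) * h1) with 0 by lra. ring.
Qed.

Lemma opC33_top_state1 l :
  opC X3 X3 (top_state 1 l) =
  Fadd (top_state 0 l)
    (Fscal (RtoC (top_coef 1 l / ((2 * INR l + 3) * top_coef 2 l))) (top_state 2 l)).
Proof.
  unfold top_state. rewrite (opC33_hform l _ _ _ (is_derive_top_radial1_v3 l)
    (is_derive_top_radial1_u3v3 l)), Fscal_hform, Fadd_hform.
  apply hform_ext; intros u v.
  unfold top_radial, top_radial1_du3dv3, top_poly.
  pose proof (top_coef_pos 2 l). rewrite top_coef_1.
  rewrite Nat.add_0_r. replace (l + 1)%nat with (S l) by lia.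
  replace (l + 2)%nat with (S (S l)) by lia.
  pose proof (bessel_h_rec l (sqnorm3 u * sqnorm3 v)) as R1.
  pose proof (bessel_h_rec (S l) (sqnorm3 u * sqnorm3 v)) as R2. rewrite S_INR in R2.
  assert (0 <= INR l) by apply pos_INR.
  set (K := top_coef 0 l) in *. set (K2 := top_coef 2 l) in *.
  set (Q := sqnorm3 u * sqnorm3 v) in *.
  set (h0 := bessel_h l Q) in *. set (h1 := bessel_h (S l) Q) in *.
  set (h2 := bessel_h (S (S l)) Q) in *. set (h3 := bessel_h (S (S (S l))) Q) in *.
  set (u3 := coord u X3). set (v3 := coord v X3).
  set (qu := sqnorm3 u) in *. set (qv := sqnorm3 v) in *.
  simpl pow.
  transitivity (K * 2 ^ l * h0 + K * (2 * INR l + 3) / ((2 * INR l + 3) * K2) *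
      (K2 * (2 * (2 * 2 ^ l)) * h2 * ((2 * INR l + 3) * u3 * u3 - qu)
       * ((2 * INR l + 3) * v3 * v3 - qv))
    + (2 * INR l + 3) * K * (2 * 2 ^ l) *
      (u3 * u3 * v3 * v3 * (h1 + 4 * Q * h3 - 2 * (2 * (INR l + 1) + 3) * h2)
       - (h0 + 4 * Q * h2 - 2 * (2 * INR l + 3) * h1) / (2 * (2 * INR l + 3)))).
  - unfold Q. field. lra.
  - replace (h1 + 4 * Q * h3 - 2 * (2 * (INR l + 1) + 3) * h2) with 0 by lra.
    replace (h0 + 4 * Q * h2 - 2 * (2 * INR l + 3) * h1) with 0 by lra.
    field. lra.
Qed.

Definition lincomb (s : list (C * (nat * Z * Z))) : PhysFun :=
  fun u v => fold_right
    (fun p acc => match snd p with (l, m, n) => (acc + fst p * Psi l m n u v)%C end) (RtoC 0) s.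

Lemma lincomb_app s1 s2 u v : lincomb (s1 ++ s2) u v = (lincomb s1 u v + lincomb s2 u v)%C.
Proof.
  induction s1 as [|[c [[l m] n]] s1 IH]; unfold lincomb in *; cbn [fold_right app snd fst].
  - ring.
  - rewrite IH. ring.
Qed.

Lemma lincomb_scal c s u v :
  lincomb (map (fun p => ((c * fst p)%C, snd p)) s) u v = (c * lincomb s u v)%C.
Proof.
  induction s as [|[c' [[l m] n]] s IH]; unfold lincomb in *; cbn [fold_right map snd fst].
  - ring.
  - rewrite IH. ring.
Qed.

Lemma in_Vphys_Fadd f g : in_Vphys f -> in_Vphys g -> in_Vphys (Fadd f g).
Proof.
  intros [s1 [F1 ->]] [s2 [F2 ->]]. exists (s1 ++ s2). split.
  - now apply Forall_app.
  - apply PhysFun_ext; intros u v. symmetry. apply (lincomb_app s1 s2 u v).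
Qed.

Lemma in_Vphys_Fscal c f : in_Vphys f -> in_Vphys (Fscal c f).
Proof.
  intros [s [F ->]]. exists (map (fun p => ((c * fst p)%C, snd p)) s). split.
  - apply Forall_map. eapply Forall_impl; [| exact F]. now intros [c' [[l m] n]].
  - apply PhysFun_ext; intros u v. symmetry. apply (lincomb_scal c s u v).
Qed.

Lemma in_Vphys_Fzero : in_Vphys Fzero.
Proof. exists nil. split; [constructor | reflexivity]. Qed.

Lemma in_Vphys_Psi l m n : valid_idx l m n -> in_Vphys (Psi l m n).
Proof.
  intros H. exists ((RtoC 1, (l, m, n)) :: nil). split.
  - now constructor.
  - apply PhysFun_ext; intros u v. cbn [fold_right snd fst]. ring.
Qed.

Lemma Fscal_0 f : Fscal (RtoC 0) f = Fzero.
Proof. apply PhysFun_ext; intros u v. unfold Fscal, Fzero. ring. Qed.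

Lemma in_Vphys_scal_Psi c l m n :
  (c <> 0 -> valid_idx l m n) -> in_Vphys (Fscal (RtoC c) (Psi l m n)).
Proof.
  intros H. destruct (Req_dec c 0) as [-> | Hc].
  - rewrite Fscal_0. apply in_Vphys_Fzero.
  - now apply in_Vphys_Fscal, in_Vphys_Psi, H.
Qed.

Lemma ladder_coef_neq0_raise l m : (Z.abs m <= Z.of_nat l)%Z -> ladder_coef l m <> 0 ->
  (Z.abs (m + 1) <= Z.of_nat l)%Z.
Proof.
  intros H Hc. destruct (Z.eq_dec m (Z.of_nat l)) as [-> | Hm]; [| lia].
  now rewrite ladder_coef_top in Hc.
Qed.

Lemma ladder_coef_neq0_lower l m : (Z.abs m <= Z.of_nat l)%Z -> ladder_coef l (m - 1) <> 0 ->
  (Z.abs (m - 1) <= Z.of_nat l)%Z.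
Proof.
  intros H Hc. destruct (Z.eq_dec m (- Z.of_nat l)) as [-> | Hm]; [| lia].
  now rewrite ladder_coef_bottom in Hc.
Qed.

Lemma valid_idx_raise_m l m n :
  valid_idx l m n -> ladder_coef l m <> 0 -> valid_idx l (m + 1) n.
Proof. intros [Hm Hn] Hc. split; [now apply ladder_coef_neq0_raise | exact Hn]. Qed.

Lemma valid_idx_lower_m l m n :
  valid_idx l m n -> ladder_coef l (m - 1) <> 0 -> valid_idx l (m - 1) n.
Proof. intros [Hm Hn] Hc. split; [now apply ladder_coef_neq0_lower | exact Hn]. Qed.

Lemma valid_idx_raise_n l m n :
  valid_idx l m n -> ladder_coef l n <> 0 -> valid_idx l m (n + 1).
Proof. intros [Hm Hn] Hc. split; [exact Hm | now apply ladder_coef_neq0_raise]. Qed.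

Lemma valid_idx_lower_n l m n :
  valid_idx l m n -> ladder_coef l (n - 1) <> 0 -> valid_idx l m (n - 1).
Proof. intros [Hm Hn] Hc. split; [exact Hm | now apply ladder_coef_neq0_lower]. Qed.

Lemma in_Vphys_raise_lower (T : ax -> ax -> PhysFun -> PhysFun) f :
  in_Vphys (raise T f) -> in_Vphys (lower T f) -> in_Vphys (T X2 X3 f) /\ in_Vphys (T X3 X1 f).
Proof.
  intros Hr Hl.
  assert (E23 : T X2 X3 f = Fadd (Fscal (RtoC (/ 2)) (raise T f)) (Fscal (RtoC (/ 2)) (lower T f))).
  { apply PhysFun_ext; intros u v. unfold raise, lower, Fadd, Fscal.
    destruct (T X2 X3 f u v), (T X3 X1 f u v). apply injective_projections; simpl; field. }
  assert (E31 : T X3 X1 f = Fadd (Fscal (0, - / 2) (raise T f)) (Fscal (0, / 2) (lower T f))).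
  { apply PhysFun_ext; intros u v. unfold raise, lower, Fadd, Fscal.
    destruct (T X2 X3 f u v), (T X3 X1 f u v). apply injective_projections; simpl; field. }
  rewrite E23, E31. split; apply in_Vphys_Fadd; now apply in_Vphys_Fscal.
Qed.

Lemma in_Vphys_opA_Psi l m n : valid_idx l m n ->
  in_Vphys (opA X2 X3 (Psi l m n)) /\ in_Vphys (opA X3 X1 (Psi l m n)).
Proof.
  intros V. apply in_Vphys_raise_lower.
  - rewrite raise_opA_Psi by exact V. apply in_Vphys_scal_Psi. now apply valid_idx_raise_m.
  - rewrite lower_opA_Psi by exact V. apply in_Vphys_scal_Psi. now apply valid_idx_lower_m.
Qed.

Lemma in_Vphys_opB_Psi l m n : valid_idx l m n ->
  in_Vphys (opB X2 X3 (Psi l m n)) /\ in_Vphys (opB X3 X1 (Psi l m n)).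
Proof.
  intros V. apply in_Vphys_raise_lower.
  - rewrite raise_opB_Psi by exact V. apply in_Vphys_scal_Psi. now apply valid_idx_raise_n.
  - rewrite lower_opB_Psi by exact V. apply in_Vphys_scal_Psi. now apply valid_idx_lower_n.
Qed.

Lemma Psi_000_neq0 : Psi 0 0 0 <> Fzero.
Proof.
  intros E. pose proof (f_equal (fun F => F ((0, 0), 0) ((0, 0), 0)) E) as E0.
  rewrite (Psi_top_state 0 0 (le_0_n 2) : Psi 0 0 0 = top_state 0 0) in E0.
  apply (f_equal fst) in E0. simpl in E0. unfold top_radial, top_poly, hpow in E0.
  rewrite sqnorm3_origin, Rmult_0_l, bessel_h_0 in E0.
  pose proof (top_coef_pos 0 0). unfold bessel_coef in E0. simpl in E0. lra.
Qed.

Lemma Cmult_RtoC_reg_l x (z w : C) : x <> 0 -> (RtoC x * z = RtoC x * w)%C -> z = w.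
Proof.
  intros Hx E. destruct z as [a b], w as [c d].
  pose proof (f_equal fst E); pose proof (f_equal snd E); simpl in *.
  apply injective_projections; simpl; apply (Rmult_eq_reg_l x); lra.
Qed.

Lemma Cmult_RtoC_eq0 x (z : C) : x <> 0 -> (RtoC x * z = RtoC 0)%C -> z = RtoC 0.
Proof. intros Hx E. apply (Cmult_RtoC_reg_l x); [exact Hx |]. rewrite E. ring. Qed.

Lemma Cconj_RtoC x : Cconj (RtoC x) = RtoC x.
Proof. apply injective_projections; simpl; ring. Qed.

Lemma Z_down_ind (P : Z -> Prop) (a b : Z) :
  P b -> (forall m, (a <= m < b)%Z -> P (m + 1)%Z -> P m) -> forall m, (a <= m <= b)%Z -> P m.
Proof.
  intros Hb Hstep m Hm. replace m with (b - Z.of_nat (Z.to_nat (b - m)))%Z by lia.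
  assert (Hk : (Z.of_nat (Z.to_nat (b - m)) <= b - a)%Z) by lia.
  induction (Z.to_nat (b - m)) as [|k IH].
  - now rewrite Z.sub_0_r.
  - apply Hstep; [lia |]. replace (b - Z.of_nat (S k) + 1)%Z with (b - Z.of_nat k)%Z by lia.
    apply IH. lia.
Qed.

(** * Consequences of the symmetry of the operators *)

Section Symmetric.

Variable ip : PhysFun -> PhysFun -> C.
Hypothesis Hip : is_inner_product_on_Vphys ip.

Lemma ip_herm f g : in_Vphys f -> in_Vphys g -> ip g f = Cconj (ip f g).
Proof. destruct Hip as [_ [_ [H _]]]. apply H. Qed.

Lemma ip_scal_r c f g : in_Vphys f -> in_Vphys g -> ip f (Fscal c g) = (c * ip f g)%C.
Proof. destruct Hip as [_ [H _]]. apply H. Qed.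

Lemma ip_add_r f g h : in_Vphys f -> in_Vphys g -> in_Vphys h ->
  ip f (Fadd g h) = (ip f g + ip f h)%C.
Proof. destruct Hip as [H _]. apply H. Qed.

Lemma ip_scal_l c f g : in_Vphys f -> in_Vphys g -> ip (Fscal c f) g = (Cconj c * ip f g)%C.
Proof.
  intros Hf Hg. rewrite ip_herm, ip_scal_r, (ip_herm f g), Cmult_conj, Cconj_conj by
    auto using in_Vphys_Fscal.
  reflexivity.
Qed.

Lemma ip_add_l f g h : in_Vphys f -> in_Vphys g -> in_Vphys h ->
  ip (Fadd f g) h = (ip f h + ip g h)%C.
Proof.
  intros Hf Hg Hh. rewrite ip_herm, ip_add_r, Cplus_conj, <- !ip_herm by auto using in_Vphys_Fadd.
  reflexivity.
Qed.

(* The scalar may vanish exactly where [f] falls outside [V_phys]. *)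
Lemma ip_scal_real_l c f g : (c <> 0 -> in_Vphys f) -> in_Vphys g ->
  ip (Fscal (RtoC c) f) g = (RtoC c * ip f g)%C.
Proof.
  intros Hf Hg. destruct (Req_dec c 0) as [-> | Hc].
  - rewrite Fscal_0, <- (Fscal_0 Fzero), ip_scal_l by auto using in_Vphys_Fzero.
    rewrite Cconj_RtoC. ring.
  - rewrite ip_scal_l, Cconj_RtoC by auto. reflexivity.
Qed.

Lemma ip_scal_real_r c f g : in_Vphys f -> (c <> 0 -> in_Vphys g) ->
  ip f (Fscal (RtoC c) g) = (RtoC c * ip f g)%C.
Proof.
  intros Hf Hg. destruct (Req_dec c 0) as [-> | Hc].
  - rewrite Fscal_0, <- (Fscal_0 Fzero), ip_scal_r by auto using in_Vphys_Fzero. ring.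
  - now rewrite ip_scal_r by auto.
Qed.

Lemma ip_eigen_orth T f g a b : symmetric_on_Vphys ip T -> in_Vphys f -> in_Vphys g ->
  T f = Fscal (RtoC a) f -> T g = Fscal (RtoC b) g -> a <> b -> ip f g = RtoC 0.
Proof.
  intros HT Hf Hg Ef Eg Hab. pose proof (HT f g Hf Hg) as E.
  rewrite Ef, Eg, ip_scal_l, ip_scal_r, Cconj_RtoC in E by auto.
  apply (Cmult_RtoC_eq0 (a - b)); [lra |]. rewrite RtoC_minus.
  transitivity (RtoC a * ip f g - RtoC b * ip f g)%C; [ring | rewrite E; ring].
Qed.

Lemma ip_raise_lower T f g :
  symmetric_on_Vphys ip (T X2 X3) -> symmetric_on_Vphys ip (T X3 X1) ->
  in_Vphys f -> in_Vphys g ->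
  in_Vphys (T X2 X3 f) /\ in_Vphys (T X3 X1 f) -> in_Vphys (T X2 X3 g) /\ in_Vphys (T X3 X1 g) ->
  ip (raise T f) g = ip f (lower T g).
Proof.
  intros H23 H31 Hf Hg [Hf23 Hf31] [Hg23 Hg31]. unfold raise, lower.
  rewrite ip_add_l, ip_scal_l, ip_add_r, ip_scal_r, H23, H31 by auto using in_Vphys_Fscal.
  f_equal. f_equal. apply injective_projections; simpl; ring.
Qed.

Hypothesis HA : forall i j : ax, symmetric_on_Vphys ip (opA i j).
Hypothesis HB : forall i j : ax, symmetric_on_Vphys ip (opB i j).
Hypothesis HC : forall i j : ax, symmetric_on_Vphys ip (opC i j).

Lemma ladder_opA l m n l' m' n' : valid_idx l m n -> valid_idx l' m' n' ->
  (RtoC (ladder_coef l m) * ip (Psi l (m + 1) n) (Psi l' m' n'))%C =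
  (RtoC (ladder_coef l' (m' - 1)) * ip (Psi l m n) (Psi l' (m' - 1) n'))%C.
Proof.
  intros Va Vb.
  rewrite <- ip_scal_real_l, <- ip_scal_real_r, <- raise_opA_Psi, <- lower_opA_Psi
    by eauto using in_Vphys_Psi, valid_idx_raise_m, valid_idx_lower_m.
  apply ip_raise_lower; auto using in_Vphys_Psi, in_Vphys_opA_Psi.
Qed.

Lemma ladder_opB l m n l' m' n' : valid_idx l m n -> valid_idx l' m' n' ->
  (RtoC (ladder_coef l n) * ip (Psi l m (n + 1)) (Psi l' m' n'))%C =
  (RtoC (ladder_coef l' (n' - 1)) * ip (Psi l m n) (Psi l' m' (n' - 1)))%C.
Proof.
  intros Va Vb.
  rewrite <- ip_scal_real_l, <- ip_scal_real_r, <- raise_opB_Psi, <- lower_opB_Psi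
    by eauto using in_Vphys_Psi, valid_idx_raise_n, valid_idx_lower_n.
  apply ip_raise_lower; auto using in_Vphys_Psi, in_Vphys_opB_Psi.
Qed.

Lemma ip_Psi_norm_m l m n : valid_idx l m n ->
  ip (Psi l m n) (Psi l m n) = ip (Psi l (Z.of_nat l) n) (Psi l (Z.of_nat l) n).
Proof.
  intros [Hm Hn]. revert m Hm.
  enough (H : forall m, (- Z.of_nat l <= m <= Z.of_nat l)%Z ->
    ip (Psi l m n) (Psi l m n) = ip (Psi l (Z.of_nat l) n) (Psi l (Z.of_nat l) n)).
  { intros m Hm. apply H. lia. }
  apply Z_down_ind; [reflexivity |]. intros m Hm <-.
  apply (Cmult_RtoC_reg_l (ladder_coef l m)); [apply Rgt_not_eq, ladder_coef_pos; lia |].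
  rewrite ladder_opA by (split; lia). now rewrite Z.add_simpl_r.
Qed.

Lemma ip_Psi_norm_n l m n : valid_idx l m n ->
  ip (Psi l m n) (Psi l m n) = ip (Psi l m (Z.of_nat l)) (Psi l m (Z.of_nat l)).
Proof.
  intros [Hm Hn]. revert n Hn.
  enough (H : forall n, (- Z.of_nat l <= n <= Z.of_nat l)%Z ->
    ip (Psi l m n) (Psi l m n) = ip (Psi l m (Z.of_nat l)) (Psi l m (Z.of_nat l))).
  { intros n Hn. apply H. lia. }
  apply Z_down_ind; [reflexivity |]. intros n Hn <-.
  apply (Cmult_RtoC_reg_l (ladder_coef l n)); [apply Rgt_not_eq, ladder_coef_pos; lia |].
  rewrite ladder_opB by (split; lia). now rewrite Z.add_simpl_r.
Qed.

Lemma ip_Psi_norm l m n : valid_idx l m n ->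
  ip (Psi l m n) (Psi l m n) =
  ip (Psi l (Z.of_nat l) (Z.of_nat l)) (Psi l (Z.of_nat l) (Z.of_nat l)).
Proof.
  intros [Hm Hn]. rewrite ip_Psi_norm_m, ip_Psi_norm_n by (split; lia). reflexivity.
Qed.

(* Downward along [m]: at the top, [raise] kills [Psi_l,l,n] but not [Psi_l',l,n]. *)
Lemma ip_Psi_orth_l l l' m n : (l < l')%nat -> valid_idx l m n ->
  ip (Psi l m n) (Psi l' m n) = RtoC 0.
Proof.
  intros Hl [Hm Hn]. revert m Hm.
  enough (H : forall m, (- Z.of_nat l <= m <= Z.of_nat l)%Z ->
    ip (Psi l m n) (Psi l' m n) = RtoC 0).
  { intros m Hm. apply H. lia. }
  apply Z_down_ind.
  - apply (Cmult_RtoC_eq0 (ladder_coef l' (Z.of_nat l)));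
      [apply Rgt_not_eq, ladder_coef_pos; lia |].
    pose proof (ladder_opA l (Z.of_nat l) n l' (Z.of_nat l + 1) n) as E.
    rewrite ladder_coef_top, Z.add_simpl_r in E. rewrite <- E by (split; lia). ring.
  - intros m Hm IH.
    apply (Cmult_RtoC_eq0 (ladder_coef l' m)); [apply Rgt_not_eq, ladder_coef_pos; lia |].
    pose proof (ladder_opA l m n l' (m + 1) n) as E.
    rewrite Z.add_simpl_r, IH in E. rewrite <- E by (split; lia). ring.
Qed.

Lemma ip_Psi_orth l m n l' m' n' : valid_idx l m n -> valid_idx l' m' n' ->
  (l, m, n) <> (l', m', n') -> ip (Psi l m n) (Psi l' m' n') = RtoC 0.
Proof.
  intros Va Vb Hne.
  destruct (Z.eq_dec m m') as [<- | Hm].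
  2:{ apply (ip_eigen_orth (opA X1 X2) _ _ (IZR m) (IZR m'));
      auto using in_Vphys_Psi, opA12_Psi. intros E. now apply Hm, eq_IZR. }
  destruct (Z.eq_dec n n') as [<- | Hn].
  2:{ apply (ip_eigen_orth (opB X1 X2) _ _ (IZR n) (IZR n'));
      auto using in_Vphys_Psi, opB12_Psi. intros E. now apply Hn, eq_IZR. }
  destruct (lt_eq_lt_dec l l') as [[Hlt | <-] | Hgt].
  - now apply ip_Psi_orth_l.
  - easy.
  - rewrite ip_herm, ip_Psi_orth_l, Cconj_RtoC by auto using in_Vphys_Psi. reflexivity.
Qed.

(* [C_33] maps [Psi_l,l,l] to a multiple of [Psi_l+1,l,l], and [Psi_l+1,l,l] to
   [Psi_l,l,l] plus a multiple of [Psi_l+2,l,l], which is orthogonal to [Psi_l,l,l]. *)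
Lemma ip_Psi_top_succ l :
  ip (Psi (S l) (Z.of_nat l) (Z.of_nat l)) (Psi (S l) (Z.of_nat l) (Z.of_nat l)) =
  (RtoC ((2 * INR l + 3) / (2 * INR l + 1)) *
   ip (Psi l (Z.of_nat l) (Z.of_nat l)) (Psi l (Z.of_nat l) (Z.of_nat l)))%C.
Proof.
  pose proof (Psi_top_state 0 l (le_0_n 2)) as F0. rewrite Nat.add_0_r in F0.
  pose proof (Psi_top_state 1 l ltac:(lia)) as F1. rewrite Nat.add_1_r in F1.
  pose proof (Psi_top_state 2 l ltac:(lia)) as F2.
  assert (V0 : valid_idx l (Z.of_nat l) (Z.of_nat l)) by (split; lia).
  assert (V1 : valid_idx (S l) (Z.of_nat l) (Z.of_nat l)) by (split; lia).
  assert (V2 : valid_idx (l + 2) (Z.of_nat l) (Z.of_nat l)) by (split; lia).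
  pose proof (HC X3 X3 _ _ (in_Vphys_Psi _ _ _ V0) (in_Vphys_Psi _ _ _ V1)) as E.
  rewrite F0, F1, opC33_top_state0, opC33_top_state1, <- F0, <- F1, <- F2 in E.
  rewrite ip_scal_l, ip_add_r, !ip_scal_r, (ip_Psi_orth_l l (l + 2)), Cconj_RtoC in E
    by (auto using in_Vphys_Psi, in_Vphys_Fscal; lia).
  assert (0 <= INR l) by apply pos_INR.
  set (N1 := ip (Psi (S l) _ _) _) in *. set (N0 := ip (Psi l _ _) _) in *.
  replace N0 with (RtoC ((2 * INR l + 1) / (2 * INR l + 3)) * N1)%C by (rewrite E; ring).
  destruct N1 as [a b]. apply injective_projections; simpl; field; lra.
Qed.

Lemma ip_Psi_top l : Im (ip (Psi 0 0 0) (Psi 0 0 0)) = 0 ->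
  ip (Psi l (Z.of_nat l) (Z.of_nat l)) (Psi l (Z.of_nat l) (Z.of_nat l)) =
  RtoC (Re (ip (Psi 0 0 0) (Psi 0 0 0)) * (2 * INR l + 1)).
Proof.
  intros Him. induction l as [|l IH].
  - change (Z.of_nat 0) with 0%Z. destruct (ip (Psi 0 0 0) (Psi 0 0 0)) as [a b].
    simpl in *. subst.
    apply injective_projections; simpl; ring.
  - rewrite <- (ip_Psi_norm (S l) (Z.of_nat l) (Z.of_nat l)) by (split; lia).
    rewrite ip_Psi_top_succ, IH, S_INR.
    assert (0 <= INR l) by apply pos_INR.
    apply injective_projections; simpl; field; lra.
Qed.

End Symmetric.

Theorem mainTheorem7 (ip : PhysFun -> PhysFun -> C)
  (Hip : is_inner_product_on_Vphys ip)
  (HA : forall i j : ax, symmetric_on_Vphys ip (opA i j))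
  (HB : forall i j : ax, symmetric_on_Vphys ip (opB i j))
  (HC : forall i j : ax, symmetric_on_Vphys ip (opC i j)) :
  exists r : R, 0 < r /\
    forall (l : nat) (m n : Z) (l' : nat) (m' n' : Z),
      valid_idx l m n -> valid_idx l' m' n' ->
      ip (Psi l m n) (Psi l' m' n') =
      RtoC (if (Nat.eqb l l' && Z.eqb m m' && Z.eqb n n')%bool
            then r * (2 * INR l + 1) else 0).
Proof.
  assert (V000 : valid_idx 0 0 0) by (split; simpl; lia).
  pose proof Hip as [_ [_ [_ Hpos]]].
  destruct (Hpos _ (in_Vphys_Psi _ _ _ V000) Psi_000_neq0) as [Him Hre].
  exists (Re (ip (Psi 0 0 0) (Psi 0 0 0))). split; [exact Hre |].
  intros l m n l' m' n' Va Vb.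
  destruct (Nat.eqb l l' && Z.eqb m m' && Z.eqb n n')%bool eqn:Heq.
  - apply andb_prop in Heq as [Heq Hn]. apply andb_prop in Heq as [Hl Hm].
    apply Nat.eqb_eq in Hl. apply Z.eqb_eq in Hm. apply Z.eqb_eq in Hn. subst.
    rewrite ip_Psi_norm by assumption. now apply ip_Psi_top.
  - apply ip_Psi_orth; auto. intros E. injection E as -> -> ->.
    now rewrite Nat.eqb_refl, !Z.eqb_refl in Heq.
Qed.
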